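(* Let $\mathcal{R}$ be a left-connected rewriting system over a signature $\Sigma$, let $L_i,L_j$ be left-hand sides of rules of $\mathcal{R}$, and let $S_{ij\gamma}$ (with $\epsilon_{ij\gamma}\colon L_i+L_j\to S_{ij\gamma}$) be a hyperedge gluing and $S_{ij\gamma'}$ (with $\epsilon_{ij\gamma'}\colon S_{ij\gamma}\to S_{ij\gamma'}$) a subsequent node gluing, as described below, such that $S_{ij\gamma'}$ yields a critical pair. If the critical pair yielded by $in(S_{ij\gamma})\to S_{ij\gamma}\leftarrow out(S_{ij\gamma})$ is joinable, then so is the critical pair yielded by $in(S_{ij\gamma'})\to S_{ij\gamma'}\leftarrow out(S_{ij\gamma'})$.
   Context: A signature $\Sigma$ is a set of triples $(x,n,m)$ (label, arity, coarity). A $\Sigma$-hypergraph $G=(V,E,s,t,l)$ has finite sets $V$ (nodes), $E$ (hyperedges), maps $s,t\colon E\to V^*$ (lists of sources/targets) and a labelling $l\colon E\to\Sigma$ sending a hyperedge with $n$ sources and $m$ targets to some $(x,n,m)$. Morphisms preserve sources, targets and labels; they form the category $\mathbf{Hyp}_\Sigma$, where colimits are computed componentwise and monos/epis are injective/surjective on nodes and hyperedges. Composition is written $f;g$; $\iota_1,\iota_2$ are coprojections. A hypergraph is discrete if it has no hyperedges. A path is a list of hyperedges $[e_1,\dots,e_n]$ with some target of $e_k$ equal to a source of $e_{k+1}$ for each $k$; it goes from $v$ to $v'$ if $v$ is a source of $e_1$ and $v'$ a target of $e_n$; a cycle is a path with some source of $e_1$ a target of $e_n$. In-degree (out-degree)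 of a node $v$: number of pairs $(e,i)$ with $v$ the $i$-th target (source) of $e$; $in(H)$, $out(H)$: nodes of in-degree $0$, out-degree $0$. $H$ is ma (monogamous acyclic) if it has no cycle and all in- and out-degrees are $\le 1$. A cospan $I\to H\leftarrow O$ with $I,O$ discrete is an ma-cospan if $H$ is ma and the legs are mono with images $in(H)$ and $out(H)$. $H$ is strongly connected if for all $x\in in(H)$, $y\in out(H)$ there is a path from $x$ to $y$. A left-connected rule is a span $L\xleftarrow{[i_L,o_L]}K=I+O\xrightarrow{[i_R,o_R]}R$ with $I,O$ discrete, $I\to L\leftarrow O$, $I\to R\leftarrow O$ ma-cospans, $[i_L,o_L]$ mono, $L$ strongly connected; a left-connected rewriting system is a finite set of such rules. A derivation $(n\to G\leftarrow m)\Rrightarrow(n\to H\leftarrow m)$ between ma-cospans via a rule $L\leftarrow K\to R$ consists of a convex match $L\to G$ (a mono such that every path in $G$ between nodes of the image has all its hyperedges in the image), a hypergraph $C$ and a diagram $G\leftarrow C\to H$, $K\to C$, $R\to H$, $n+m\to C$ with $K,L,C,G$ and $K,R,C,H$ pushout squares (the left one a boundary complement, automatic for left-connected systems) commuting with the interfaces; for left-connected systems, mono matches are convex and pushout complements exist uniquely. A pre-critical pair is a pair of derivations $(n\to H_1\leftarrow m)\Lleftarrow(n\to S\leftarrow m)\Rrightarrow(n\to H_2\leftarrow m)$ with matches $m_1\colon L_i\to S$, $m_2\colon L_j\to S$ such that $[m_1,m_2]$ is epi; it is parallel if $m_1$ factors through the pushout complement $C_2\to S$ of the second derivation and $m_2$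 through the pushout complement $C_1\to S$ of the first; critical if not parallel; joinable if there is $W$ with $(n\to H_1\leftarrow m)$ and $(n\to H_2\leftarrow m)$ both rewriting in finitely many (possibly zero) derivations to $(n\to W\leftarrow m)$. Hyperedge gluing: let $M$ be a nonempty set of pairs $(e,e')$, $e$ a hyperedge of $L_i$, $e'$ of $L_j$, with equal labels, no hyperedge in two pairs; $\gamma$ has hyperedges $M$ and nodes the pairs $(v,v')$ that are $k$-th sources (or $k$-th targets) of $e,e'$ for some $(e,e')\in M$ and $k$, with projections $p_1^\gamma\colon\gamma\to L_i$, $p_2^\gamma\colon\gamma\to L_j$; $\epsilon_{ij\gamma}\colon L_i+L_j\to S_{ij\gamma}$ is the coequaliser of $p_1^\gamma;\iota_1$ and $p_2^\gamma;\iota_2$. Node gluing: with $I_1=in(S_{ij\gamma})\cap\epsilon_{ij\gamma}(\iota_1(in(L_i)))$, $I_2=in(S_{ij\gamma})\cap\epsilon_{ij\gamma}(\iota_2(in(L_j)))$, $O_1=out(S_{ij\gamma})\cap\epsilon_{ij\gamma}(\iota_1(out(L_i)))$, $O_2=out(S_{ij\gamma})\cap\epsilon_{ij\gamma}(\iota_2(out(L_j)))$, let $N$ be a set of pairs in $I_1\times O_2$, or in $I_2\times O_1$, with no element in two pairs; $\gamma'$ is the discrete hypergraph with nodes $N$ and projections $p_1^{\gamma'},p_2^{\gamma'}\colon\gamma'\to S_{ij\gamma}$; $\epsilon_{ij\gamma'}\colon S_{ij\gamma}\to S_{ij\gamma'}$ is their coequaliser. $S_{ij\gamma}$ yields a critical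 pair if $\iota_1;\epsilon_{ij\gamma}$, $\iota_2;\epsilon_{ij\gamma}$ are mono, $in(S_{ij\gamma})\xrightarrow{\subseteq}S_{ij\gamma}\xleftarrow{\subseteq}out(S_{ij\gamma})$ is an ma-cospan and the derivations from it with these matches (via the rules with left-hand sides $L_i$, $L_j$) form a critical pair — this is ''the critical pair yielded by'' it; likewise for $S_{ij\gamma'}$ with matches $\iota_k;\epsilon_{ij\gamma};\epsilon_{ij\gamma'}$. *)

From mathcomp Require Import all_boot.

Set Implicit Arguments.
Unset Strict Implicit.
Unset Printing Implicit Defensive.

Record signature := Signature { sym :> Type; ar : sym -> nat; coar : sym -> nat }.

Section Hypergraphs.
Variable Sg : signature.

Record hyp := Hyp {
  hV : finType; hE : finType;
  src : hE -> seq hV; tgt : hE -> seq hV; lab : hE -> Sg;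
  src_ar : forall e, size (src e) = ar (lab e);
  tgt_ar : forall e, size (tgt e) = coar (lab e) }.

Record hom (G H : hyp) := Hom {
  hv : hV G -> hV H; he : hE G -> hE H;
  hom_src : forall e, src (he e) = map hv (src e);
  hom_tgt : forall e, tgt (he e) = map hv (tgt e);
  hom_lab : forall e, lab (he e) = lab e }.

Definition heq G H (f g : hom G H) := hv f =1 hv g /\ he f =1 he g.

Lemma hcomp_src G H K (f : hom G H) (g : hom H K) e :
  src (he g (he f e)) = map (hv g \o hv f) (src e).
Proof. by rewrite !hom_src map_comp. Qed.
Lemma hcomp_tgt G H K (f : hom G H) (g : hom H K) e :
  tgt (he g (he f e)) = map (hv g \o hv f) (tgt e).
Proof. by rewrite !hom_tgt map_comp. Qed.
Lemma hcomp_lab G H K (f : hom G H) (g : hom H K) e :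
  lab (he g (he f e)) = lab e.
Proof. by rewrite !hom_lab. Qed.
Definition hcomp G H K (f : hom G H) (g : hom H K) : hom G K :=
  @Hom G K (hv g \o hv f) (he g \o he f)
    (hcomp_src f g) (hcomp_tgt f g) (hcomp_lab f g).

Lemma hid_src G e : src e = map (@id (hV G)) (src e). Proof. by rewrite map_id. Qed.
Lemma hid_tgt G e : tgt e = map (@id (hV G)) (tgt e). Proof. by rewrite map_id. Qed.
Definition hid G : hom G G :=
  @Hom G G id id (@hid_src G) (@hid_tgt G) (fun e => erefl).

Definition coprod_src G H (e : (hE G + hE H)%type) : seq (hV G + hV H)%type :=
  match e with inl e => map inl (src e) | inr e => map inr (src e) end.
Definition coprod_tgt G H (e : (hE G + hE H)%type) : seq (hV G + hV H)%type :=
  match e with inl e => map inl (tgt e) | inr e => map inr (tgt e) end.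
Definition coprod_lab G H (e : (hE G + hE H)%type) : Sg :=
  match e with inl e => lab e | inr e => lab e end.
Lemma coprod_src_ar G H e : size (@coprod_src G H e) = ar (coprod_lab e).
Proof. by case: e => e /=; rewrite size_map src_ar. Qed.
Lemma coprod_tgt_ar G H e : size (@coprod_tgt G H e) = coar (coprod_lab e).
Proof. by case: e => e /=; rewrite size_map tgt_ar. Qed.
Definition coprod G H : hyp :=
  @Hyp (hV G + hV H)%type (hE G + hE H)%type (@coprod_src G H) (@coprod_tgt G H)
    (@coprod_lab G H) (@coprod_src_ar G H) (@coprod_tgt_ar G H).

Definition iota1 G H : hom G (coprod G H) :=
  @Hom G (coprod G H) inl inl (fun e => erefl) (fun e => erefl) (fun e => erefl).
Definition iota2 G H : hom H (coprod G H) :=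
  @Hom H (coprod G H) inr inr (fun e => erefl) (fun e => erefl) (fun e => erefl).

Section Copair.
Variables (G H K : hyp) (f : hom G K) (g : hom H K).
Definition copair_v (x : (hV G + hV H)%type) : hV K :=
  match x with inl a => hv f a | inr b => hv g b end.
Definition copair_e (x : (hE G + hE H)%type) : hE K :=
  match x with inl a => he f a | inr b => he g b end.
Lemma copair_src e : src (copair_e e) = map copair_v (coprod_src e).
Proof. by case: e => e /=; rewrite hom_src -map_comp. Qed.
Lemma copair_tgt e : tgt (copair_e e) = map copair_v (coprod_tgt e).
Proof. by case: e => e /=; rewrite hom_tgt -map_comp. Qed.
Lemma copair_lab e : lab (copair_e e) = coprod_lab e.
Proof. by case: e => e /=; rewrite hom_lab. Qed.
Definition copair : hom (coprod G H) K :=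
  @Hom (coprod G H) K copair_v copair_e copair_src copair_tgt copair_lab.
End Copair.

Definition discrete (G : hyp) := #|hE G| = 0.

Definition discrete_of (V : finType) : hyp :=
  @Hyp V void (fun e => match e with end) (fun e => match e with end)
    (fun e => match e with end) (fun e => match e with end) (fun e => match e with end).

Definition mono G H (f : hom G H) := injective (hv f) /\ injective (he f).
Definition epi G H (f : hom G H) :=
  (forall y, exists x, hv f x = y) /\ (forall y, exists x, he f x = y).

Definition indeg (G : hyp) (v : hV G) := \sum_(e : hE G) count_mem v (tgt e).
Definition outdeg (G : hyp) (v : hV G) := \sum_(e : hE G) count_mem v (src e).

Definition linked (G : hyp) (e e' : hE G) := has (fun v => v \in src e') (tgt e).
Definition is_path (G : hyp) (p : seq (hE G)) :=
  if p is e1 :: p' then path (@linked G) e1 p' else false.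
Definition path_from (G : hyp) (v v' : hV G) (p : seq (hE G)) :=
  if p is e1 :: p' then
    [&& path (@linked G) e1 p', v \in src e1 & v' \in tgt (last e1 p')]
  else false.
Definition is_cycle (G : hyp) (p : seq (hE G)) :=
  if p is e1 :: p' then
    path (@linked G) e1 p' && has (fun v => v \in src e1) (tgt (last e1 p'))
  else false.

Definition ma (G : hyp) :=
  (~ exists p : seq (hE G), is_cycle p) /\
  (forall v : hV G, indeg v <= 1 /\ outdeg v <= 1).

Definition is_ma_cospan (I O G : hyp) (i : hom I G) (o : hom O G) :=
  [/\ discrete I /\ discrete O, ma G, mono i /\ mono o,
      (forall v, indeg v = 0 <-> exists x, hv i x = v) &
      (forall v, outdeg v = 0 <-> exists x, hv o x = v)].

Definition strongly_connected (G : hyp) :=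
  forall x y : hV G, indeg x = 0 -> outdeg y = 0 -> exists p, path_from x y p.

Definition pushout (A B C D : hyp) (f : hom A B) (g : hom A C)
    (f' : hom B D) (g' : hom C D) :=
  heq (hcomp f f') (hcomp g g') /\
  forall (T : hyp) (h : hom B T) (k : hom C T), heq (hcomp f h) (hcomp g k) ->
    exists u : hom D T, [/\ heq (hcomp f' u) h, heq (hcomp g' u) k &
      forall u' : hom D T, heq (hcomp f' u') h -> heq (hcomp g' u') k -> heq u' u].

(* Coequaliser of two parallel maps gamma -> A, presented by the pairs of nodes
   and of hyperedges (p1 x, p2 x) of A they identify. *)
Definition respects (A T : hyp) (rv : hV A -> hV A -> Prop)
    (re : hE A -> hE A -> Prop) (h : hom A T) :=
  (forall x y, rv x y -> hv h x = hv h y) /\ (forall x y, re x y -> he h x = he h y).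
Definition coequaliser (A Q : hyp) (rv : hV A -> hV A -> Prop)
    (re : hE A -> hE A -> Prop) (q : hom A Q) :=
  respects rv re q /\
  forall (T : hyp) (h : hom A T), respects rv re h ->
    exists u : hom Q T, heq (hcomp q u) h /\
      forall u' : hom Q T, heq (hcomp q u') h -> heq u' u.

Record rule := Rule {
  rL : hyp; rR : hyp; rI : hyp; rO : hyp;
  iL : hom rI rL; oL : hom rO rL; iR : hom rI rR; oR : hom rO rR }.
Definition rK (r : rule) := coprod (rI r) (rO r).

Definition left_connected_rule (r : rule) :=
  [/\ is_ma_cospan (iL r) (oL r), is_ma_cospan (iR r) (oR r),
      mono (copair (iL r) (oL r)) & strongly_connected (rL r)].

Record cospan (n m : hyp) := Cospan { apex : hyp; cin : hom n apex; cout : hom m apex }.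

Definition convex_match (L G : hyp) (mu : hom L G) :=
  mono mu /\
  forall (v v' : hV G) (p : seq (hE G)),
    (exists x, hv mu x = v) -> (exists x, hv mu x = v') -> path_from v v' p ->
    forall e, e \in p -> exists x, he mu x = e.

Definition derivation (n m : hyp) (r : rule) (G H : cospan n m)
    (mu : hom (rL r) (apex G)) (C : hyp) (c : hom (rK r) C)
    (k : hom C (apex G)) (h : hom C (apex H)) (rr : hom (rR r) (apex H))
    (d : hom (coprod n m) C) :=
  [/\ is_ma_cospan (cin G) (cout G) /\ is_ma_cospan (cin H) (cout H),
      convex_match mu,
      pushout (copair (iL r) (oL r)) c mu k,
      pushout (copair (iR r) (oR r)) c rr h &
      heq (hcomp d k) (copair (cin G) (cout G)) /\
      heq (hcomp d h) (copair (cin H) (cout H))].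

Section System.
Variables (Idx : finType) (Rs : Idx -> rule).

Definition step (n m : hyp) (G H : cospan n m) :=
  exists (i : Idx) (mu : hom (rL (Rs i)) (apex G)) (C : hyp) (c : hom (rK (Rs i)) C)
    (k : hom C (apex G)) (h : hom C (apex H)) (rr : hom (rR (Rs i)) (apex H))
    (d : hom (coprod n m) C), @derivation n m (Rs i) G H mu C c k h rr d.

Inductive rewrites (n m : hyp) : cospan n m -> cospan n m -> Prop :=
| rw_refl G : rewrites G G
| rw_step G H K : step G H -> rewrites H K -> rewrites G K.

Definition cospan_iso (n m : hyp) (G H : cospan n m) :=
  exists (phi : hom (apex G) (apex H)) (psi : hom (apex H) (apex G)),
    [/\ heq (hcomp phi psi) (hid _), heq (hcomp psi phi) (hid _),
        heq (hcomp (cin G) phi) (cin H) & heq (hcomp (cout G) phi) (cout H)].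

Definition joinable (n m : hyp) (H1 H2 : cospan n m) :=
  exists W1 W2 : cospan n m, [/\ rewrites H1 W1, rewrites H2 W2 & cospan_iso W1 W2].

Definition inD (S : hyp) := discrete_of {v : hV S | indeg v == 0}.
Definition outD (S : hyp) := discrete_of {v : hV S | outdeg v == 0}.
Definition inIncl (S : hyp) : hom (inD S) S :=
  @Hom (inD S) S val (fun e => match e with end) (fun e => match e with end)
    (fun e => match e with end) (fun e => match e with end).
Definition outIncl (S : hyp) : hom (outD S) S :=
  @Hom (outD S) S val (fun e => match e with end) (fun e => match e with end)
    (fun e => match e with end) (fun e => match e with end).
Definition ioCospan (S : hyp) : cospan (inD S) (outD S) :=
  @Cospan (inD S) (outD S) S (inIncl S) (outIncl S).

Definition critical_pair (S : hyp) (i j : Idx)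
    (m1 : hom (rL (Rs i)) S) (m2 : hom (rL (Rs j)) S)
    (H1 : cospan (inD S) (outD S)) C1 (c1 : hom (rK (Rs i)) C1) (k1 : hom C1 S)
    (h1 : hom C1 (apex H1)) (r1 : hom (rR (Rs i)) (apex H1)) (d1 : hom (coprod _ _) C1)
    (H2 : cospan (inD S) (outD S)) C2 (c2 : hom (rK (Rs j)) C2) (k2 : hom C2 S)
    (h2 : hom C2 (apex H2)) (r2 : hom (rR (Rs j)) (apex H2)) (d2 : hom (coprod _ _) C2) :=
  [/\ @derivation _ _ (Rs i) (ioCospan S) H1 m1 C1 c1 k1 h1 r1 d1,
      @derivation _ _ (Rs j) (ioCospan S) H2 m2 C2 c2 k2 h2 r2 d2,
      epi (copair m1 m2) &
      ~ ((exists u : hom (rL (Rs i)) C2, heq (hcomp u k2) m1) /\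
         (exists u : hom (rL (Rs j)) C1, heq (hcomp u k1) m2))].

Definition yields_cp (S : hyp) (i j : Idx)
    (m1 : hom (rL (Rs i)) S) (m2 : hom (rL (Rs j)) S) :=
  [/\ mono m1, mono m2, is_ma_cospan (inIncl S) (outIncl S) &
      exists H1 C1 c1 k1 h1 r1 d1 H2 C2 c2 k2 h2 r2 d2,
        @critical_pair S i j m1 m2 H1 C1 c1 k1 h1 r1 d1 H2 C2 c2 k2 h2 r2 d2].

Definition cp_joinable (S : hyp) (i j : Idx)
    (m1 : hom (rL (Rs i)) S) (m2 : hom (rL (Rs j)) S) :=
  forall H1 C1 c1 k1 h1 r1 d1 H2 C2 c2 k2 h2 r2 d2,
    @derivation _ _ (Rs i) (ioCospan S) H1 m1 C1 c1 k1 h1 r1 d1 ->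
    @derivation _ _ (Rs j) (ioCospan S) H2 m2 C2 c2 k2 h2 r2 d2 ->
    joinable H1 H2.
End System.

Definition hedge_gluing (L1 L2 : hyp) (M : {set hE L1 * hE L2}) :=
  [/\ M != set0,
      (forall p, p \in M -> lab p.1 = lab p.2) &
      (forall p q, p \in M -> q \in M -> (p.1 = q.1 \/ p.2 = q.2) -> p = q)].

(* Nodes of gamma: pairs (v,v') that are k-th sources (or k-th targets) of e, e'
   for some (e,e') in M. *)
Definition gamma_node (L1 L2 : hyp) (M : {set hE L1 * hE L2}) (vv : hV L1 * hV L2) :=
  exists2 p, p \in M &
    (vv \in zip (src p.1) (src p.2)) \/ (vv \in zip (tgt p.1) (tgt p.2)).

(* eps : L1 + L2 -> S is the coequaliser of p1^gamma;iota1 and p2^gamma;iota2. *)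
Definition hedge_coeq (L1 L2 S : hyp) (M : {set hE L1 * hE L2})
    (eps : hom (coprod L1 L2) S) :=
  coequaliser
    (fun x y : hV (coprod L1 L2) =>
       exists v v', [/\ x = inl v, y = inr v' & gamma_node M (v, v')])
    (fun x y : hE (coprod L1 L2) =>
       exists e e', [/\ x = inl e, y = inr e' & (e, e') \in M]) eps.

Definition node_gluing (L1 L2 S : hyp) (eps : hom (coprod L1 L2) S)
    (N : {set hV S * hV S}) :=
  let I1 x := indeg x = 0 /\ exists v, indeg v = 0 /\ hv eps (inl v) = x in
  let I2 x := indeg x = 0 /\ exists v, indeg v = 0 /\ hv eps (inr v) = x in
  let O1 x := outdeg x = 0 /\ exists v, outdeg v = 0 /\ hv eps (inl v) = x in
  let O2 x := outdeg x = 0 /\ exists v, outdeg v = 0 /\ hv eps (inr v) = x in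
  ((forall p, p \in N -> I1 p.1 /\ O2 p.2) \/ (forall p, p \in N -> I2 p.1 /\ O1 p.2)) /\
  (forall p q x, p \in N -> q \in N -> (x = p.1 \/ x = p.2) -> (x = q.1 \/ x = q.2) -> p = q).

(* eps' : S -> S' is the coequaliser of p1^gamma', p2^gamma' (gamma' discrete, nodes N). *)
Definition node_coeq (S S' : hyp) (N : {set hV S * hV S}) (eps' : hom S S') :=
  coequaliser (fun x y => (x, y) \in N) (fun _ _ => False) eps'.

End Hypergraphs.

Arguments yields_cp {Sg Idx} Rs {S} i j m1 m2.
Arguments cp_joinable {Sg Idx} Rs {S} i j m1 m2.

From mathcomp Require Import all_boot.
From Stdlib Require Import FunctionalExtensionality ProofIrrelevance.

Set Implicit Arguments.
Unset Strict Implicit.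
Unset Printing Implicit Defensive.

(* Since every pair of [N] glues an input of [S] to an output of [S], the graph [S'] is,
   up to isomorphism, the cospan [in(S) -> S <- out(S)] with those interface nodes
   identified.  Such a gluing of interfaces commutes with double-pushout rewriting: the
   quotient square pastes onto both pushout squares of a derivation, and the glued graphs
   stay monogamous and acyclic as long as the glued pairs form no cycle of
   input-to-output paths.  That condition holds for [S] because [S'] is acyclic, and it
   is preserved along rewriting, since a derivation never creates a new path from an
   input to an output.  As derivations with left-connected rules are unique up to
   isomorphism, gluing a joining of the critical pair of [S] yields a joining of the
   critical pair of [S']. *)

Section Morphisms.
Variable Sg : signature.
Local Notation hyp := (hyp Sg).
Implicit Types G H K T : hyp.

Lemma hom_ext G H (f g : hom G H) : hv f =1 hv g -> he f =1 he g -> f = g.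
Proof.
case: f g => fv fe fs ft fl [gv ge gs gt gl] /= Ev Ee.
move: (functional_extensionality _ _ Ev) (functional_extensionality _ _ Ee) => ? ?; subst.
by rewrite (proof_irrelevance _ fs gs) (proof_irrelevance _ ft gt) (proof_irrelevance _ fl gl).
Qed.

Lemma heqE G H (f g : hom G H) : heq f g -> f = g.
Proof. by case=> *; apply: hom_ext. Qed.

Lemma heq_refl G H (f : hom G H) : heq f f.
Proof. by []. Qed.

Lemma hvE G H (f g : hom G H) : f = g -> hv f =1 hv g.
Proof. by move->. Qed.

Lemma heE G H (f g : hom G H) : f = g -> he f =1 he g.
Proof. by move->. Qed.

Lemma hcompA G H K T (f : hom G H) (g : hom H K) (k : hom K T) :
  hcomp (hcomp f g) k = hcomp f (hcomp g k).
Proof. exact: hom_ext. Qed.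

Lemma hcomp1h G H (f : hom G H) : hcomp (hid G) f = f.
Proof. exact: hom_ext. Qed.

Lemma hcomph1 G H (f : hom G H) : hcomp f (hid H) = f.
Proof. exact: hom_ext. Qed.

Lemma hcomp_copair G H K T (f : hom G K) (g : hom H K) (h : hom K T) :
  hcomp (copair f g) h = copair (hcomp f h) (hcomp g h).
Proof. by apply: hom_ext => [[x|x]|[x|x]]. Qed.

Lemma copair_iota1 G H K (f : hom G K) (g : hom H K) : hcomp (iota1 G H) (copair f g) = f.
Proof. exact: hom_ext. Qed.

Lemma copair_iota2 G H K (f : hom G K) (g : hom H K) : hcomp (iota2 G H) (copair f g) = g.
Proof. exact: hom_ext. Qed.

Definition iso G H (f : hom G H) :=
  exists g : hom H G, hcomp f g = hid G /\ hcomp g f = hid H.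

Lemma iso_bij_nodes G H (f : hom G H) : iso f -> bijective (hv f).
Proof. by case=> g [fg gf]; exists (hv g); [apply: hvE fg | apply: hvE gf]. Qed.

Lemma iso_bij_edges G H (f : hom G H) : iso f -> bijective (he f).
Proof. by case=> g [fg gf]; exists (he g); [apply: heE fg | apply: heE gf]. Qed.

Lemma iso_mono G H (f : hom G H) : iso f -> mono f.
Proof. by move=> fI; split; apply: bij_inj; [apply: iso_bij_nodes | apply: iso_bij_edges]. Qed.

Lemma mono_hcomp G H K (f : hom G H) (g : hom H K) : mono f -> mono g -> mono (hcomp f g).
Proof. by move=> [f1 f2] [g1 g2]; split; apply: inj_comp. Qed.

Lemma mono_hcompl G H K (f : hom G H) (g : hom H K) : mono (hcomp f g) -> mono f.
Proof. by case=> fgv fge; split=> x y E; [apply: fgv | apply: fge]; rewrite /= E. Qed.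

Lemma mono_cancel G H K (u u' : hom G H) (g : hom H K) :
  mono g -> hcomp u g = hcomp u' g -> u = u'.
Proof.
by case=> gv ge E; apply: hom_ext => x; [apply: gv; exact: (hvE E x) | apply: ge; exact: (heE E x)].
Qed.

Lemma mono_factor G H K (f : hom G K) (g : hom H K) : mono g ->
  (forall x, exists y, hv g y = hv f x) -> (forall e, exists e', he g e' = he f e) ->
  exists u : hom G H, hcomp u g = f.
Proof.
move=> [gv ge] Hv He.
have {}Hv x : exists y, hv g y == hv f x by have [y <-] := Hv x; exists y.
have {}He e : exists e', he g e' == he f e by have [e' <-] := He e; exists e'.
pose uv x := xchoose (Hv x); pose ue e := xchoose (He e).
have uvE x : hv g (uv x) = hv f x by apply/eqP/(xchooseP (Hv x)).
have ueE e : he g (ue e) = he f e by apply/eqP/(xchooseP (He e)).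
have s_ok e : src (ue e) = map uv (src e).
  by apply: (inj_map gv); rewrite -hom_src ueE hom_src -map_comp; apply: eq_map => y /=.
have t_ok e : tgt (ue e) = map uv (tgt e).
  by apply: (inj_map gv); rewrite -hom_tgt ueE hom_tgt -map_comp; apply: eq_map => y /=.
have l_ok e : lab (ue e) = lab e by rewrite -(hom_lab g) ueE hom_lab.
by exists (Hom s_ok t_ok l_ok); apply: hom_ext.
Qed.

Lemma discrete_noedge G : discrete G -> hE G -> False.
Proof. by move=> dG e; have := card0_eq dG e; rewrite inE. Qed.

Lemma discrete_hom_ext G H (f g : hom G H) : discrete G -> hv f =1 hv g -> f = g.
Proof. by move=> dG E; apply: hom_ext => // e; case: (discrete_noedge dG e). Qed.

Lemma discrete_ofP (V : finType) : discrete (discrete_of Sg V).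
Proof. by rewrite /discrete card_void. Qed.

Definition discrete_hom (V : finType) T (f : V -> hV T) : hom (discrete_of Sg V) T :=
  @Hom Sg (discrete_of Sg V) T f (fun e => match e with end) (fun e => match e with end)
    (fun e => match e with end) (fun e => match e with end).

End Morphisms.

Definition symr (T : Type) (r : rel T) : rel T := fun x y => r x y || r y x.

Lemma connect_symr_sym (T : finType) (r : rel T) : connect_sym (symr r).
Proof. by apply: sym_connect_sym => x y; rewrite /symr orbC. Qed.

Lemma connect_symr (T : finType) (r : rel T) x y : connect r x y -> connect (symr r) x y.
Proof. by apply: connect_sub => a b rab; rewrite connect1 // /symr rab. Qed.

(* A class of the equivalence generated by [r] is represented by its [root]. *)
Section NodeQuotient.
Variables (Sg : signature) (G : hyp Sg) (r : rel (hV G)).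

Definition nclass_type := {x : hV G | root (symr r) x == x}.

Definition nclass (x : hV G) : nclass_type :=
  exist _ (root (symr r) x) (introT eqP (root_root (connect_symr_sym r) x)).

Definition nquot : hyp Sg :=
  @Hyp Sg nclass_type (hE G) (fun e => map nclass (src e)) (fun e => map nclass (tgt e))
    (@lab _ G) (fun e => etrans (size_map _ _) (src_ar e))
    (fun e => etrans (size_map _ _) (tgt_ar e)).

Definition nquot_map : hom G nquot :=
  @Hom Sg G nquot nclass id (fun e => erefl) (fun e => erefl) (fun e => erefl).

Lemma nclass_eq x y : (nclass x == nclass y) = connect (symr r) x y.
Proof. by rewrite -(root_connect (connect_symr_sym r)) -val_eqE. Qed.

Lemma nclassK (z : nclass_type) : nclass (val z) = z.
Proof. by apply: val_inj => /=; apply/eqP; case: z. Qed.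

Lemma nquot_map_rel x y : r x y -> hv nquot_map x = hv nquot_map y.
Proof. by move=> rxy; apply/eqP; rewrite nclass_eq connect1 // /symr rxy. Qed.

Variables (T : hyp Sg) (h : hom G T) (hr : forall x y, r x y -> hv h x = hv h y).

Lemma connect_symr_resp x y : connect (symr r) x y -> hv h x = hv h y.
Proof.
case/connectP=> p; elim: p x => [|z p IH] x /=; first by move=> _ ->.
by case/andP=> /orP [/hr|/hr/esym] -> /IH.
Qed.

Lemma root_resp x : hv h (root (symr r) x) = hv h x.
Proof. by apply: connect_symr_resp; rewrite connect_symr_sym connect_root. Qed.

Lemma nquot_lift_src e : src (he h e) = map (hv h \o val) (map nclass (src e)).
Proof. by rewrite hom_src -map_comp; apply: eq_map => x /=; rewrite root_resp. Qed.

Lemma nquot_lift_tgt e : tgt (he h e) = map (hv h \o val) (map nclass (tgt e)).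
Proof. by rewrite hom_tgt -map_comp; apply: eq_map => x /=; rewrite root_resp. Qed.

Definition nquot_lift : hom nquot T :=
  @Hom Sg nquot T (hv h \o val) (he h) nquot_lift_src nquot_lift_tgt (@hom_lab _ _ _ h).

Lemma nquot_liftK : hcomp nquot_map nquot_lift = h.
Proof. by apply: hom_ext => x //=; rewrite root_resp. Qed.

Lemma nquot_lift_uniq (u : hom nquot T) : hcomp nquot_map u = h -> u = nquot_lift.
Proof. by move=> E; apply: hom_ext => [z|e] /=; rewrite -E //= nclassK. Qed.

End NodeQuotient.

Lemma nquot_map_epi Sg (G T : hyp Sg) (r : rel (hV G)) (u u' : hom (nquot r) T) :
  hcomp (nquot_map r) u = hcomp (nquot_map r) u' -> u = u'.
Proof.
move=> E; apply: hom_ext => [z|e]; last exact: (heE E e).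
by rewrite -(nclassK z); exact: (hvE E (val z)).
Qed.

Section Pushouts.
Variable Sg : signature.
Local Notation hyp := (hyp Sg).

Lemma pushoutE (A B C D : hyp) (f : hom A B) (g : hom A C) (f' : hom B D) (g' : hom C D) :
  pushout f g f' g' <->
  hcomp f f' = hcomp g g' /\
  forall (T : hyp) (h : hom B T) (k : hom C T), hcomp f h = hcomp g k ->
    exists u : hom D T, [/\ hcomp f' u = h, hcomp g' u = k &
      forall u' : hom D T, hcomp f' u' = h -> hcomp g' u' = k -> u' = u].
Proof.
split.
- case=> /heqE E U; split=> // T h k hk.
  have [u [/heqE u1 /heqE u2 u3]] := U T h k (eq_ind _ (fun z => heq _ z) (heq_refl _) _ hk).
  by exists u; split=> // u' e1 e2; apply/heqE/u3; rewrite ?e1 ?e2.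
- case=> E U; split; first by rewrite E.
  move=> T h k /heqE hk; have [u [u1 u2 u3]] := U T h k hk.
  by exists u; split; rewrite ?u1 ?u2 // => u' /heqE e1 /heqE e2; rewrite (u3 u' e1 e2).
Qed.

Lemma pushout_comm (A B C D : hyp) (f : hom A B) (g : hom A C) (f' : hom B D) (g' : hom C D) :
  pushout f g f' g' -> hcomp f f' = hcomp g g'.
Proof. by case=> /heqE. Qed.

Section Uniqueness.
Variables (A B C : hyp) (f : hom A B) (g : hom A C).

Lemma pushout_uniq D D' (f1 : hom B D) (g1 : hom C D) (f2 : hom B D') (g2 : hom C D') :
  pushout f g f1 g1 -> pushout f g f2 g2 ->
  exists phi : hom D D', [/\ iso phi, hcomp f1 phi = f2 & hcomp g1 phi = g2].
Proof.
move=> /pushoutE [E1 U1] /pushoutE [E2 U2].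
have [u [u1 u2 _]] := U1 _ _ _ E2; have [v [v1 v2 _]] := U2 _ _ _ E1.
have [w [_ _ w1]] := U1 _ _ _ E1; have [w' [_ _ w2]] := U2 _ _ _ E2.
exists u; split=> //; exists v; split.
- by rewrite (w1 (hid D)) ?hcomph1 // (w1 (hcomp u v)) // -hcompA ?u1 ?u2.
- by rewrite (w2 (hid D')) ?hcomph1 // (w2 (hcomp v u)) // -hcompA ?v1 ?v2.
Qed.

Lemma pushout_hcomp_iso D D' (f1 : hom B D) (g1 : hom C D) (phi : hom D D') :
  pushout f g f1 g1 -> iso phi -> pushout f g (hcomp f1 phi) (hcomp g1 phi).
Proof.
move=> /pushoutE [E U] [psi [p1 p2]]; apply/pushoutE; split; first by rewrite -!hcompA E.
move=> T h k hk; have [u [u1 u2 u3]] := U _ _ _ hk.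
exists (hcomp psi u); split; try by rewrite hcompA -(hcompA phi) p1 hcomp1h.
move=> u' e1 e2; rewrite -[u']hcomp1h -p2 hcompA (u3 (hcomp phi u')) //; by rewrite -hcompA.
Qed.

End Uniqueness.

Lemma pushout_iso_span (A B C C' D : hyp) (f : hom A B) (g : hom A C) (psi : hom C C')
   (f' : hom B D) (g' : hom C' D) :
  iso psi -> pushout f (hcomp g psi) f' g' -> pushout f g f' (hcomp psi g').
Proof.
move=> [chi [c1 c2]] /pushoutE [E U]; apply/pushoutE; split; first by rewrite E hcompA.
move=> T h k hk.
have hk' : hcomp f h = hcomp (hcomp g psi) (hcomp chi k).
  by rewrite hk hcompA -(hcompA psi) c1 hcomp1h.
have [u [u1 u2 u3]] := U _ _ _ hk'.
exists u; split=> //; first by rewrite hcompA u2 -hcompA c1 hcomp1h.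
by move=> u' e1 e2; apply: u3; rewrite // -e2 -!hcompA c2 hcomp1h.
Qed.

Lemma pushout_paste (A B C D E F : hyp) (f : hom A B) (g : hom A C) (f' : hom B D)
  (g' : hom C D) (k : hom C E) (g'' : hom D F) (k' : hom E F) :
  pushout f g f' g' -> pushout g' k g'' k' -> pushout f (hcomp g k) (hcomp f' g'') k'.
Proof.
move=> /pushoutE [E1 U1] /pushoutE [E2 U2]; apply/pushoutE; split.
  by rewrite -hcompA E1 !hcompA E2.
move=> T h l hl.
have [u1 [a1 b1 c1]] := U1 T h (hcomp k l) (etrans hl (hcompA _ _ _)).
have [u2 [a2 b2 c2]] := U2 T u1 l b1.
exists u2; split=> //; first by rewrite hcompA a2.
move=> w ew1 ew2; apply: c2 => //; apply: c1; first by rewrite -hcompA.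
by rewrite -hcompA E2 hcompA ew2.
Qed.

Section QuotientSquare.
Variables (C D : hyp) (h : hom C D) (r : rel (hV C)) (r' : rel (hV D)).
Hypotheses (hr : forall a b, r a b -> r' (hv h a) (hv h b))
  (hr' : forall a' b', r' a' b' -> exists a b, [/\ r a b, a' = hv h a & b' = hv h b]).

Lemma nquot_resp a b : r a b -> hv (hcomp h (nquot_map r')) a = hv (hcomp h (nquot_map r')) b.
Proof. by move/hr; apply: nquot_map_rel. Qed.

Definition nquot_hom := nquot_lift nquot_resp.

Lemma nquot_homK : hcomp (nquot_map r) nquot_hom = hcomp h (nquot_map r').
Proof. exact: nquot_liftK. Qed.

Lemma nquot_pushout : pushout h (nquot_map r) (nquot_map r') nquot_hom.
Proof.
apply/pushoutE; split; first by rewrite nquot_homK.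
move=> T u v E.
have ur a' b' : r' a' b' -> hv u a' = hv u b'.
  case/hr' => a [b [rab -> ->]].
  move: (hvE E a) (hvE E b) => /= -> ->.
  by have /= -> := nquot_map_rel rab.
exists (nquot_lift ur); split; first exact: nquot_liftK.
  by apply: (@nquot_map_epi _ _ _ r); rewrite -hcompA nquot_homK hcompA nquot_liftK.
by move=> u' e1 _; apply: nquot_lift_uniq.
Qed.

End QuotientSquare.

End Pushouts.

Section DiscretePushout.
Variables (Sg : signature) (K B C : hyp Sg) (dK : discrete K) (f : hom K B) (g : hom K C).

Definition dglue : rel (hV (coprod B C)) :=
  fun a b => [exists k, (a == inl (hv f k)) && (b == inr (hv g k))].

Lemma dglue_pushout :
  pushout f g (hcomp (iota1 B C) (nquot_map dglue)) (hcomp (iota2 B C) (nquot_map dglue)).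
Proof.
apply/pushoutE; split.
  apply: discrete_hom_ext => // k; apply: nquot_map_rel.
  by apply/existsP; exists k; rewrite !eqxx.
move=> T h k E.
have hr x y : dglue x y -> hv (copair h k) x = hv (copair h k) y.
  by case/existsP=> z /andP [/eqP -> /eqP ->]; apply: hvE E z.
exists (nquot_lift hr); split; rewrite ?hcompA ?nquot_liftK; try by apply: hom_ext.
move=> u' e1 e2; apply: nquot_lift_uniq.
by apply: hom_ext => [[x|x]|[x|x]] /=; rewrite -?e1 -?e2.
Qed.

Variables (D : hyp Sg) (f' : hom B D) (g' : hom C D).
Hypotheses (po : pushout f g f' g') (g_inj : injective (hv g)).

Definition glued_at k (a : (hV B + hV C)%type) := (a == inl (hv f k)) || (a == inr (hv g k)).

Lemma glued_atP k a : glued_at k a -> a = inl (hv f k) \/ a = inr (hv g k).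
Proof. by case/orP=> /eqP ->; [left|right]. Qed.

(* Since [g] is injective, a zigzag of gluings stays within one fibre of [f]. *)
Lemma dglue_connect a b : connect (symr dglue) a b ->
  a = b \/ exists k1 k2, [/\ glued_at k1 a, glued_at k2 b & hv f k1 = hv f k2].
Proof.
case/connectP=> p; elim: p a => [|x p IH] a /=; first by move=> _ ->; left.
case/andP=> ax px Eb; right.
have [k Hk] : exists k, (a = inl (hv f k) /\ x = inr (hv g k)) \/
                        (x = inl (hv f k) /\ a = inr (hv g k)).
  by case/orP: ax => /existsP [k /andP [/eqP -> /eqP ->]]; exists k; [left|right].
case: (IH x px Eb) => [<-|[k1 [k2 [s1 s2 E]]]].
  by exists k, k; case: Hk => [[-> ->]|[-> ->]]; rewrite /glued_at !eqxx ?orbT.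
exists k, k2; split=> //; first by case: Hk => [[-> _]|[_ ->]]; rewrite /glued_at eqxx ?orbT.
case: Hk => [[_ Ex]|[Ex _]]; case/glued_atP: s1; rewrite Ex //.
  by case=> /g_inj ->.
by case=> ->.
Qed.

Let dglue_iso : exists phi : hom (nquot dglue) D,
  [/\ iso phi, hcomp (hcomp (iota1 B C) (nquot_map dglue)) phi = f'
     & hcomp (hcomp (iota2 B C) (nquot_map dglue)) phi = g'].
Proof. exact: pushout_uniq dglue_pushout po. Qed.

Lemma dpushout_nodes x y : copair_v f' g' x = copair_v f' g' y -> connect (symr dglue) x y.
Proof.
have [phi [phiI <- <-]] := dglue_iso.
move=> E; rewrite -nclass_eq; apply/eqP/(bij_inj (iso_bij_nodes phiI)).
by case: x y E => ? [] ?.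
Qed.

Lemma dpushout_eqr c1 c2 : hv g' c1 = hv g' c2 ->
  c1 = c2 \/ exists k1 k2, [/\ c1 = hv g k1, c2 = hv g k2 & hv f k1 = hv f k2].
Proof.
move/(@dpushout_nodes (inr c1) (inr c2))/dglue_connect => [[->]|[k1 [k2 [s1 s2 E]]]].
  by left.
by right; exists k1, k2; case/glued_atP: s1 => // -[->]; case/glued_atP: s2 => // -[->].
Qed.

Lemma dpushout_eqrl c b : hv g' c = hv f' b -> exists k, c = hv g k /\ b = hv f k.
Proof.
move/(@dpushout_nodes (inr c) (inl b))/dglue_connect => [//|[k1 [k2 [s1 s2 E]]]].
by exists k1; case/glued_atP: s1 => [//|[->]]; case/glued_atP: s2 => [[->]|].
Qed.

Lemma dpushout_injl : injective (hv f').
Proof.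
move=> b1 b2 /(@dpushout_nodes (inl b1) (inl b2))/dglue_connect [[->]//|[k1 [k2 []]]].
by case/glued_atP=> // -[->]; case/glued_atP=> // -[->].
Qed.

Lemma dpushout_edges_disjoint e1 e2 : he f' e1 <> he g' e2.
Proof. by have [phi [phiI <- <-]] := dglue_iso; move/(bij_inj (iso_bij_edges phiI)). Qed.

Lemma dpushout_injr_edges : injective (he g').
Proof.
by have [phi [phiI _ <-]] := dglue_iso; move=> e1 e2 /(bij_inj (iso_bij_edges phiI)) [->].
Qed.

Lemma dpushout_cover_nodes z : (exists b, hv f' b = z) \/ (exists c, hv g' c = z).
Proof.
have [phi [phiI <- <-]] := dglue_iso; have [psi _ psiK] := iso_bij_nodes phiI.
rewrite -(psiK z) -(nclassK (psi z)).
by case: (val (psi z)) => [b|c]; [left; exists b | right; exists c].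
Qed.

Lemma dpushout_cover_edges e : (exists b, he f' b = e) \/ (exists c, he g' c = e).
Proof.
have [phi [phiI <- <-]] := dglue_iso; have [psi _ psiK] := iso_bij_edges phiI.
by rewrite -(psiK e); case: (psi e) => [b|c]; [left; exists b | right; exists c].
Qed.

End DiscretePushout.

Section Degrees.
Variables (E V : finType) (inc : E -> seq V).

Definition incdeg v := \sum_(e : E) count_mem v (inc e).

Lemma incdeg0P v : reflect (forall e, v \notin inc e) (incdeg v == 0).
Proof.
rewrite /incdeg sum_nat_eq0; apply: (iffP forallP) => H e; last exact/eqP/count_memPn/H.
by apply/count_memPn/eqP/H.
Qed.

Lemma incdeg_gt0 v e : v \in inc e -> 0 < incdeg v.
Proof. by rewrite lt0n => ve; apply/incdeg0P => /(_ e); rewrite ve. Qed.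

Lemma incdeg_le1 v e1 e2 : incdeg v <= 1 -> v \in inc e1 -> v \in inc e2 -> e1 = e2.
Proof.
move=> le1 v1 v2; apply/eqP/negPn/negP => ne.
have : count_mem v (inc e1) + count_mem v (inc e2) <= incdeg v.
  rewrite /incdeg (bigD1 e1) // (bigD1 e2) /=; last by rewrite eq_sym.
  by rewrite addnA leq_addr.
move: v1 v2; rewrite -!has_pred1 !has_count => c1 c2 le.
by have := leq_trans (leq_trans (leq_add c1 c2) le) le1.
Qed.

End Degrees.

Section DegreeTransport.
Variables (E V E' V' : finType) (inc : E -> seq V) (inc' : E' -> seq V').
Variables (fe : E -> E') (fv : V -> V').
Hypothesis inc_map : forall e, inc' (fe e) = map fv (inc e).

Lemma incdeg0_map v : incdeg inc' (fv v) == 0 -> incdeg inc v == 0.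
Proof.
move/incdeg0P=> H; apply/incdeg0P => e; apply/negP => ve.
by move: (H (fe e)); rewrite inc_map map_f.
Qed.

Lemma incdeg_bij v : bijective fe -> injective fv -> incdeg inc' (fv v) = incdeg inc v.
Proof.
move=> feB fvI; rewrite /incdeg (reindex fe) /=; last exact: onW_bij.
by apply: eq_bigr => e _; rewrite inc_map count_map; apply: eq_count => x /=; rewrite inj_eq.
Qed.

End DegreeTransport.

Lemma incdeg_map_fibre (E V V' : finType) (inc : E -> seq V) (f : V -> V') u :
  (forall w1 w2, 0 < incdeg inc w1 -> 0 < incdeg inc w2 -> f w1 = f w2 -> w1 = w2) ->
  exists2 t, f t = f u & incdeg (fun e => map f (inc e)) (f u) = incdeg inc t.
Proof.
move=> f_inj.
case: (pickP [pred t | (f t == f u) && (0 < incdeg inc t)]) => [t /andP [/eqP ftu t_pos]|none].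
  exists t => //; apply: eq_bigr => e _; rewrite count_map; apply: eq_in_count => w w_e /=.
  apply/eqP/eqP => [fwu|->//]; apply: f_inj (incdeg_gt0 w_e) t_pos _.
  by rewrite fwu ftu.
have deg0 w : f w = f u -> incdeg inc w = 0.
  by move=> fwu; move: (none w) => /=; rewrite fwu eqxx /= lt0n => /negbFE/eqP.
exists u; rewrite // deg0 //; apply/eqP; rewrite sum_nat_eq0; apply/forallP => e /=.
rewrite count_map eqn0Ngt -has_count; apply/hasPn => w w_e /=.
by apply/negP => /eqP/deg0 w0; move: (incdeg_gt0 w_e); rewrite w0.
Qed.

Section Paths.
Variable Sg : signature.
Local Notation hyp := (hyp Sg).
Implicit Types G H : hyp.

Definition estep G : rel (hV G) := fun a b => [exists e, (a \in src e) && (b \in tgt e)].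

Definition reach1 G (a b : hV G) := [exists t, estep a t && connect (@estep G) t b].

Lemma estepP G (a b : hV G) : reflect (exists e, a \in src e /\ b \in tgt e) (estep a b).
Proof. by apply: (iffP existsP) => [[e /andP]|[e /andP]]; exists e. Qed.

Lemma estep_reach1 G (a b : hV G) : estep a b -> reach1 a b.
Proof. by move=> ab; apply/existsP; exists b; rewrite ab connect0. Qed.

Lemma reach1_connect G (a b : hV G) : reach1 a b -> connect (@estep G) a b.
Proof. by case/existsP=> t /andP [a_t tb]; apply: connect_trans tb; apply: connect1. Qed.

Lemma connect_reach1 G (a b : hV G) : connect (@estep G) a b -> a != b -> reach1 a b.
Proof.
case/connectP=> [[|x p]] /=; first by move=> _ ->; rewrite eqxx.
by case/andP=> ax px Eb _; apply/existsP; exists x; rewrite ax; apply/connectP; exists p.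
Qed.

Lemma reach1_catr G (a b c : hV G) : reach1 a b -> connect (@estep G) b c -> reach1 a c.
Proof.
case/existsP=> t /andP [a_t tb] bc; apply/existsP; exists t.
by rewrite a_t (connect_trans tb bc).
Qed.

Lemma reach1_catl G (a b c : hV G) : connect (@estep G) a b -> reach1 b c -> reach1 a c.
Proof.
case: (eqVneq a b) => [-> //|ne ab /reach1_connect bc].
exact: reach1_catr (connect_reach1 ab ne) bc.
Qed.

Lemma path_from_reach1 G (a b : hV G) p : path_from a b p -> reach1 a b.
Proof.
elim: p a => [|e1 p IH] a //= /and3P [pth sa tb].
case: p IH pth tb => [|e2 p] IH pth tb.
  by apply: estep_reach1; apply/estepP; exists e1.
move: pth => /= /andP [/hasP [t t1 t2] pth].
have tb' : reach1 t b by apply: IH; rewrite /= pth t2.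
by apply: reach1_catl tb'; apply/connect1/estepP; exists e1.
Qed.

Lemma reach1_path_from G (a b : hV G) : reach1 a b -> exists p, path_from a b p.
Proof.
case/existsP=> t /andP [/estepP [e [sa tt]] /connectP [s]].
elim: s a t e sa tt => [|x s IH] a t e sa tt /=.
  by move=> _ ->; exists [:: e]; rewrite /= sa tt.
case/andP=> /estepP [e' [s' t']] pth Eb.
have [[|e1 q] //=] := IH t x e' s' t' pth Eb.
case/and3P=> pq st tb; exists [:: e, e1 & q]; rewrite /= pq sa tb !andbT /=.
by apply/hasP; exists t.
Qed.

Lemma cycle_reach1 G : (exists p : seq (hE G), is_cycle p) <-> exists a : hV G, reach1 a a.
Proof.
split.
  case=> [[|e1 p]] //= /andP [pth /hasP [t tl ts]]; exists t.
  by apply: (@path_from_reach1 _ _ _ (e1 :: p)); rewrite /= pth ts tl.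
case=> a /reach1_path_from [[|e1 p]] //= /and3P [pth sa ta]; exists (e1 :: p).
by rewrite /= pth; apply/hasP; exists a.
Qed.

Lemma ma_acyclic G (a : hV G) : ma G -> ~~ reach1 a a.
Proof. by case=> nc _; apply/negP => r; apply: nc; apply/cycle_reach1; exists a. Qed.

Lemma hom_estep G H (f : hom G H) a b : estep a b -> estep (hv f a) (hv f b).
Proof.
case/estepP=> e [sa tb]; apply/estepP; exists (he f e).
by rewrite hom_src hom_tgt !map_f.
Qed.

Lemma hom_connect G H (f : hom G H) a b :
  connect (@estep G) a b -> connect (@estep H) (hv f a) (hv f b).
Proof.
case/connectP=> s; elim: s a => [|x s IH] a /=; first by move=> _ ->.
by case/andP=> ax px Eb; apply: connect_trans (IH _ px Eb); apply/connect1/hom_estep.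
Qed.

Lemma hom_reach1 G H (f : hom G H) a b : reach1 a b -> reach1 (hv f a) (hv f b).
Proof.
case/existsP=> t /andP [a_t tb]; apply/existsP; exists (hv f t).
by rewrite hom_estep //= hom_connect.
Qed.

Lemma indeg0P G (v : hV G) : reflect (forall e, v \notin tgt e) (indeg v == 0).
Proof. exact: incdeg0P. Qed.

Lemma outdeg0P G (v : hV G) : reflect (forall e, v \notin src e) (outdeg v == 0).
Proof. exact: incdeg0P. Qed.

Lemma indeg_le1 G (v : hV G) e1 e2 : indeg v <= 1 -> v \in tgt e1 -> v \in tgt e2 -> e1 = e2.
Proof. exact: incdeg_le1. Qed.

Lemma outdeg_le1 G (v : hV G) e1 e2 : outdeg v <= 1 -> v \in src e1 -> v \in src e2 -> e1 = e2.
Proof. exact: incdeg_le1. Qed.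

Lemma indeg0_hom G H (f : hom G H) v : indeg (hv f v) == 0 -> indeg v == 0.
Proof. exact: (incdeg0_map (hom_tgt f)). Qed.

Lemma outdeg0_hom G H (f : hom G H) v : outdeg (hv f v) == 0 -> outdeg v == 0.
Proof. exact: (incdeg0_map (hom_src f)). Qed.

Lemma indeg_iso G H (f : hom G H) v : iso f -> indeg (hv f v) = indeg v.
Proof.
by move=> fI; apply: (incdeg_bij (hom_tgt f)); [exact: iso_bij_edges | exact: (iso_mono fI).1].
Qed.

Lemma outdeg_iso G H (f : hom G H) v : iso f -> outdeg (hv f v) = outdeg v.
Proof.
by move=> fI; apply: (incdeg_bij (hom_src f)); [exact: iso_bij_edges | exact: (iso_mono fI).1].
Qed.

End Paths.

(* A path of [G] between nodes of a mono image of a strongly connected [L] that left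
   the image would, by monogamy, have to exit at an output and re-enter at an input of
   [L]; strong connectivity of [L] then closes a cycle. *)
Section Convexity.
Variables (Sg : signature) (L G : hyp Sg) (mu : hom L G).
Hypotheses (mu_mono : mono mu) (maG : ma G).

Definition mapped (e : hE G) := [exists x, he mu x == e].

Lemma outdeg0_exit a e : hv mu a \in src e -> ~~ mapped e -> outdeg a == 0.
Proof.
move=> ae ne; apply/outdeg0P => e0; apply/negP => a0; move/negP: ne; apply.
apply/existsP; exists e0; apply/eqP/(outdeg_le1 (maG.2 (hv mu a)).2) => //.
by rewrite hom_src map_f.
Qed.

Lemma indeg0_entry b e : hv mu b \in tgt e -> ~~ mapped e -> indeg b == 0.
Proof.
move=> be ne; apply/indeg0P => e0; apply/negP => b0; move/negP: ne; apply.
apply/existsP; exists e0; apply/eqP/(indeg_le1 (maG.2 (hv mu b)).1) => //.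
by rewrite hom_tgt map_f.
Qed.

Lemma mapped_src x t : t \in src (he mu x) -> exists y, hv mu y = t.
Proof. by rewrite hom_src => /mapP [y _ ->]; exists y. Qed.

Lemma mapped_tgt x t : t \in tgt (he mu x) -> exists y, hv mu y = t.
Proof. by rewrite hom_tgt => /mapP [y _ ->]; exists y. Qed.

Lemma path_exit p v w : path_from v w p -> (exists a, hv mu a = v) -> has (predC mapped) p ->
  exists a q, [/\ outdeg a == 0, path_from (hv mu a) w q & has (predC mapped) q].
Proof.
elim: p v => [|e1 p IH] v //= /and3P [pth sv tw] [a0 Ea0] /orP [ne|hp].
  exists a0, (e1 :: p); rewrite /= ?pth -?Ea0 ?sv ?tw ?ne //=; split=> //.
    by apply: (outdeg0_exit (e := e1)); rewrite ?Ea0.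
  by rewrite Ea0 sv.
case: p IH pth tw hp => [|e2 p] // IH /= /andP [/hasP [t t1 t2] pth] tw hp.
case: (boolP (mapped e1)) => [/existsP [x /eqP Ex]|ne].
  apply: (IH t); rewrite /= ?pth ?t2 //.
  by apply: (@mapped_tgt x); rewrite Ex.
exists a0, [:: e1, e2 & p]; rewrite /= Ea0 sv pth tw /= ne; split=> //.
  by apply: (outdeg0_exit (e := e1)); rewrite ?Ea0.
by rewrite !andbT; apply/hasP; exists t.
Qed.

Lemma path_entry p u w : path_from u w p -> (exists b, hv mu b = w) -> has (predC mapped) p ->
  exists b q, indeg b == 0 /\ path_from u (hv mu b) q.
Proof.
elim: p u => [|e1 p IH] u //= /and3P [pth su tw] [b0 Eb0].
case: p IH pth tw => [|e2 p] IH pth tw /=.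
  rewrite orbF => ne; exists b0, [:: e1]; rewrite /= su Eb0 tw; split=> //.
  by apply: (indeg0_entry (e := e1)); rewrite ?Eb0.
move: pth => /= /andP [/hasP [t t1 t2] pth] hp.
case: (boolP (has (predC mapped) (e2 :: p))) => hp'.
  have [b [[|f1 q] [ib]]] := IH t (introT and3P (And3 pth t2 tw)) (ex_intro _ b0 Eb0) hp' => //.
  case/and3P=> pq tf bq; exists b, [:: e1, f1 & q]; rewrite /= su pq bq /= !andbT; split=> //.
  by apply/hasP; exists t.
have ne : ~~ mapped e1 by move: hp hp' => /=; case: (mapped e1); rewrite /= ?orbF => // ->.
move: hp' => /= /norP [/negbNE /existsP [x /eqP Ex] _].
have [b Eb] : exists b, hv mu b = t by apply: (@mapped_src x); rewrite Ex.
exists b, [:: e1]; rewrite /= su Eb t1; split=> //.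
by apply: (indeg0_entry (e := e1)); rewrite ?Eb.
Qed.

Lemma mono_convex : strongly_connected L -> convex_match mu.
Proof.
move=> sc; split=> // v v' p [a0 Ea0] [b0 Eb0] pth e ep.
case: (boolP (mapped e)) => [/existsP [x /eqP Ex]|ne]; first by exists x.
have hp : has (predC mapped) p by apply/hasP; exists e.
have [a [q [oa pq hq]]] := path_exit pth (ex_intro _ a0 Ea0) hp.
have [b [q' [ib pq']]] := path_entry pq (ex_intro _ b0 Eb0) hq.
have [r pr] := sc b a (eqP ib) (eqP oa).
have ba := reach1_connect (hom_reach1 mu (path_from_reach1 pr)).
by have := ma_acyclic (hv mu a) maG; rewrite (reach1_catr (path_from_reach1 pq') ba).
Qed.

End Convexity.

Lemma outdeg_indeg0 Sg (L : hyp Sg) (v : hV L) : ma L -> strongly_connected L -> indeg v = 0 ->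
  outdeg v != 0.
Proof.
move=> maL scL iv; apply/negP => /eqP ov; have [p Pp] := scL v v iv ov.
by have := ma_acyclic v maL; rewrite (path_from_reach1 Pp).
Qed.

Section IsoInvariance.
Variable Sg : signature.
Local Notation hyp := (hyp Sg).

Lemma ma_iso (G H : hyp) (phi : hom G H) : iso phi -> ma G -> ma H.
Proof.
move=> phiI; case: (phiI) => psi [_ phipsi] [nc dg]; split.
  by case/cycle_reach1=> a /(hom_reach1 psi) r; apply: nc; apply/cycle_reach1; exists (hv psi a).
move=> v; have /= <- := hvE phipsi v.
by rewrite (indeg_iso _ phiI) (outdeg_iso _ phiI).
Qed.

Lemma ma_cospan_iso (G H I O : hyp) (phi : hom G H) (i : hom I G) (o : hom O G) :
  iso phi -> is_ma_cospan i o -> is_ma_cospan (hcomp i phi) (hcomp o phi).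
Proof.
move=> phiI [dis maG [mi mo] hi ho]; have [psi phiK psiK] := iso_bij_nodes phiI.
split=> //; first exact: ma_iso phiI maG.
- by split; apply: mono_hcomp => //; apply: iso_mono.
- move=> v; rewrite -(psiK v) (indeg_iso _ phiI); split; first by case/hi=> x <-; exists x.
  by case=> x /(bij_inj (iso_bij_nodes phiI)) Ex; apply/hi; exists x.
- move=> v; rewrite -(psiK v) (outdeg_iso _ phiI); split; first by case/ho=> x <-; exists x.
  by case=> x /(bij_inj (iso_bij_nodes phiI)) Ex; apply/ho; exists x.
Qed.

Section CospanIso.
Variables n m : hyp.
Implicit Types G H K : cospan n m.

Lemma cospan_iso_refl G : cospan_iso G G.
Proof. by exists (hid _), (hid _). Qed.

Lemma cospan_iso_sym G H : cospan_iso G H -> cospan_iso H G.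
Proof.
case=> phi [psi [p1 p2 /heqE i1 /heqE o1]]; exists psi, phi; split=> //.
  by rewrite -i1 hcompA (heqE p1) hcomph1.
by rewrite -o1 hcompA (heqE p1) hcomph1.
Qed.

Lemma cospan_iso_trans G H K : cospan_iso G H -> cospan_iso H K -> cospan_iso G K.
Proof.
case=> phi [psi [/heqE p1 /heqE p2 /heqE i1 /heqE o1]].
case=> phi' [psi' [/heqE p1' /heqE p2' /heqE i1' /heqE o1']].
exists (hcomp phi phi'), (hcomp psi' psi); split.
- by rewrite hcompA -(hcompA phi') p1' hcomp1h p1.
- by rewrite hcompA -(hcompA psi) p2 hcomp1h p2'.
- by rewrite -hcompA i1 i1'.
- by rewrite -hcompA o1 o1'.
Qed.

End CospanIso.

Lemma derivation_iso_source (n m : hyp) (r : rule Sg) (G G' H : cospan n m) mu C c k h rr d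
  (phi : hom (apex G') (apex G)) (psi : hom (apex G) (apex G')) :
  left_connected_rule r -> hcomp phi psi = hid _ -> hcomp psi phi = hid _ ->
  hcomp (cin G') phi = cin G -> hcomp (cout G') phi = cout G ->
  @derivation Sg n m r G H mu C c k h rr d ->
  @derivation Sg n m r G' H (hcomp mu psi) C c (hcomp k psi) h rr d.
Proof.
move=> [_ _ _ scL] p1 p2 ei eo [[mG mH] [mmu _] po1 po2 [/heqE dk dh]].
have psiI : iso psi by exists phi.
have mG' : is_ma_cospan (cin G') (cout G').
  by have := ma_cospan_iso psiI mG; rewrite -ei -eo !hcompA p1 !hcomph1.
split=> //.
- apply: mono_convex => //; last by case: mG'.
  by apply: mono_hcomp => //; apply: iso_mono.
- exact: pushout_hcomp_iso.
- split=> //; rewrite -hcompA dk hcomp_copair -ei -eo !hcompA p1 !hcomph1.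
  exact: heq_refl.
Qed.

Section System.
Variables (Idx : finType) (Rs : Idx -> rule Sg) (HR : forall i, left_connected_rule (Rs i)).

Lemma step_iso_source (n m : hyp) (G G' H : cospan n m) :
  cospan_iso G' G -> step Rs G H -> step Rs G' H.
Proof.
case=> phi [psi [/heqE p1 /heqE p2 /heqE i1 /heqE o1]].
case=> i [mu [C [c [k [h [rr [d D]]]]]]].
exists i, (hcomp mu psi), C, c, (hcomp k psi), h, rr, d.
exact: (derivation_iso_source (HR i) p1 p2 i1 o1 D).
Qed.

Lemma rewrites_iso_source (n m : hyp) (G G' W : cospan n m) :
  cospan_iso G' G -> rewrites Rs G W -> exists2 W', rewrites Rs G' W' & cospan_iso W' W.
Proof.
move=> I R; case: R I => [G0|G0 H K s R] I; first by exists G'; [apply: rw_refl|].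
by exists K; [apply: rw_step R; exact: step_iso_source s | apply: cospan_iso_refl].
Qed.

Lemma joinable_iso (n m : hyp) (H1 H2 H1' H2' : cospan n m) :
  cospan_iso H1' H1 -> cospan_iso H2' H2 -> joinable Rs H1 H2 -> joinable Rs H1' H2'.
Proof.
move=> I1 I2 [W1 [W2 [R1 R2 I]]].
have [W1' R1' J1] := rewrites_iso_source I1 R1.
have [W2' R2' J2] := rewrites_iso_source I2 R2.
exists W1', W2'; split=> //.
exact: cospan_iso_trans J1 (cospan_iso_trans I (cospan_iso_sym J2)).
Qed.

End System.

End IsoInvariance.

Section LeftConnectedRule.
Variables (Sg : signature) (r : rule Sg).
Hypothesis lc : left_connected_rule r.
Local Notation lK := (copair (iL r) (oL r)).
Local Notation rK' := (copair (iR r) (oR r)).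

Lemma rK_discrete : discrete (rK r).
Proof.
case: lc => [[[dI dO] _ _ _ _] _ _ _].
by rewrite /discrete /rK /= card_sum dI dO.
Qed.

Lemma iL_indeg0 ki : indeg (hv (iL r) ki) == 0.
Proof. by case: lc => [[_ _ _ hi _] _ _ _]; apply/eqP/hi; exists ki. Qed.

Lemma oL_outdeg0 ko : outdeg (hv (oL r) ko) == 0.
Proof. by case: lc => [[_ _ _ _ ho] _ _ _]; apply/eqP/ho; exists ko. Qed.

Lemma oR_outdeg0 ko : outdeg (hv (oR r) ko) == 0.
Proof. by case: lc => [_ [_ _ _ _ ho] _ _]; apply/eqP/ho; exists ko. Qed.

Lemma connect_iL_oL ki ko : connect (@estep _ (rL r)) (hv (iL r) ki) (hv (oL r) ko).
Proof.
case: lc => _ _ _ sc; have [p P] := sc _ _ (eqP (iL_indeg0 ki)) (eqP (oL_outdeg0 ko)).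
exact: reach1_connect (path_from_reach1 P).
Qed.

Lemma rL_outdeg_indeg0 (v : hV (rL r)) : indeg v = 0 -> outdeg v != 0.
Proof. by case: lc => [[_ maL _ _ _] _ _ scL]; apply: outdeg_indeg0. Qed.

Lemma lK_outdeg0 (q : hV (rK r)) : outdeg (hv lK q) == 0 -> exists ko, q = inr ko.
Proof.
case: q => [ki|ko] /= o; last by exists ko.
case: lc => [[_ [nc _] _ _ _] _ _ sc]; have [p P] := sc _ _ (eqP (iL_indeg0 ki)) (eqP o).
by case: nc; apply/cycle_reach1; exists (hv (iL r) ki); apply: path_from_reach1 P.
Qed.

Lemma rK_src (q : hV (rK r)) e : hv rK' q \in src e -> exists ki, q = inl ki.
Proof.
case: q => [ki|ko] /= s; first by exists ki.
by move/outdeg0P: (oR_outdeg0 ko) => /(_ e); rewrite s.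
Qed.

Lemma rK_eq (q1 q2 : hV (rK r)) : hv rK' q1 = hv rK' q2 ->
  [\/ q1 = q2, exists ki ko, q1 = inl ki /\ q2 = inr ko
    | exists ki ko, q1 = inr ko /\ q2 = inl ki].
Proof.
case: lc => _ [_ _ [[iv _] [ov _]] _ _] _ _.
case: q1 q2 => [a|a] [b|b] /= E.
- by apply: Or31; rewrite (iv _ _ E).
- by apply: Or32; exists a, b.
- by apply: Or33; exists b, a.
- by apply: Or31; rewrite (ov _ _ E).
Qed.

Lemma derivation_inj_c (n m : hyp Sg) (G H : cospan n m) mu C c k h rr d :
  @derivation Sg n m r G H mu C c k h rr d -> injective (hv c).
Proof.
case: lc => _ _ mL _ [_ [mmu _] /pushout_comm E _ _].
have : mono (hcomp c k) by rewrite -E; apply: mono_hcomp.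
by case/mono_hcompl.
Qed.

Section PushoutComplement.
Variables (G : hyp Sg) (mu : hom (rL r) G).

Lemma pushout_complement_mono C (c : hom (rK r) C) (k : hom C G) :
  injective (hv c) -> pushout lK c mu k -> mono k.
Proof.
move=> cI po; case: (lc) => _ _ [lKI _] _.
split; last exact (dpushout_injr_edges rK_discrete po).
by move=> x y /(dpushout_eqr rK_discrete po cI) [//|[q1 [q2 [-> -> /lKI ->]]]].
Qed.

Lemma pushout_complement_factor C1 C2 (c1 : hom (rK r) C1) (k1 : hom C1 G)
    (c2 : hom (rK r) C2) (k2 : hom C2 G) :
  injective (hv c1) -> injective (hv c2) -> pushout lK c1 mu k1 -> pushout lK c2 mu k2 ->
  exists u : hom C1 C2, hcomp u k2 = k1.
Proof.
move=> c1I c2I po1 po2; have dK := rK_discrete.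
apply: mono_factor; first exact: pushout_complement_mono po2.
- move=> x; case: (dpushout_cover_nodes dK po2 (hv k1 x)) => [[l El]|//].
  have [q [-> _]] := dpushout_eqrl dK po1 c1I (esym El).
  by exists (hv c2 q); move: (hvE (pushout_comm po1) q) (hvE (pushout_comm po2) q) => /= <- <-.
- move=> e; case: (dpushout_cover_edges dK po2 (he k1 e)) => [[l El]|//].
  by case: (dpushout_edges_disjoint dK po1 El).
Qed.

Lemma pushout_complement_uniq C1 C2 (c1 : hom (rK r) C1) (k1 : hom C1 G)
    (c2 : hom (rK r) C2) (k2 : hom C2 G) :
  injective (hv c1) -> injective (hv c2) -> pushout lK c1 mu k1 -> pushout lK c2 mu k2 ->
  exists psi : hom C1 C2, [/\ iso psi, hcomp c1 psi = c2 & hcomp psi k2 = k1].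
Proof.
move=> c1I c2I po1 po2.
have k1M := pushout_complement_mono c1I po1; have k2M := pushout_complement_mono c2I po2.
have [psi psiK] := pushout_complement_factor c1I c2I po1 po2.
have [chi chiK] := pushout_complement_factor c2I c1I po2 po1.
exists psi; split=> //.
- exists chi; split.
    by apply: (mono_cancel k1M); rewrite hcompA chiK psiK hcomp1h.
  by apply: (mono_cancel k2M); rewrite hcompA psiK chiK hcomp1h.
- by apply: (mono_cancel k2M); rewrite hcompA psiK -(pushout_comm po1) (pushout_comm po2).
Qed.

End PushoutComplement.

Lemma derivation_uniq (n m : hyp Sg) (G H1 H2 : cospan n m) mu
   C1 c1 k1 h1 rr1 d1 C2 c2 k2 h2 rr2 d2 :
  @derivation Sg n m r G H1 mu C1 c1 k1 h1 rr1 d1 ->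
  @derivation Sg n m r G H2 mu C2 c2 k2 h2 rr2 d2 -> cospan_iso H1 H2.
Proof.
move=> D1 D2; have c1I := derivation_inj_c D1; have c2I := derivation_inj_c D2.
case: D1 => _ _ po1 poR1 [/heqE dk1 /heqE dh1]; case: D2 => _ _ po2 poR2 [/heqE dk2 /heqE dh2].
have [psi [psiI Ec Ek]] := pushout_complement_uniq c1I c2I po1 po2.
have Ed : hcomp d1 psi = d2.
  by apply: (mono_cancel (pushout_complement_mono c2I po2)); rewrite hcompA Ek dk1 dk2.
have poR2' : pushout rK' c1 rr2 (hcomp psi h2) by apply: pushout_iso_span; rewrite ?Ec.
have [phi [[phi' [p1 p2]] _ Eh]] := pushout_uniq poR1 poR2'.
have Ed' : hcomp d1 (hcomp h1 phi) = hcomp d2 h2 by rewrite -hcompA -Ed !hcompA Eh.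
exists phi, phi'; rewrite p1 p2; split; try exact: heq_refl.
  rewrite -(copair_iota1 (cin H1) (cout H1)) -(copair_iota1 (cin H2) (cout H2)) -dh1 -dh2.
  by rewrite !hcompA Ed'; exact: heq_refl.
rewrite -(copair_iota2 (cin H1) (cout H1)) -(copair_iota2 (cin H2) (cout H2)) -dh1 -dh2.
by rewrite !hcompA Ed'; exact: heq_refl.
Qed.

End LeftConnectedRule.

(* Rewriting creates no new path from an input to an output: a path of the result
   either stays in the context [C], or enters [R], which it can only leave through an
   output of the interface; in [L] that output is reachable from every input, by
   strong connectivity. *)
Section DerivationReach.
Variables (Sg : signature) (n m : hyp Sg) (r : rule Sg) (G H : cospan n m).
Variables (mu : hom (rL r) (apex G)) (C : hyp Sg) (c : hom (rK r) C) (k : hom C (apex G))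
  (h : hom C (apex H)) (rr : hom (rR r) (apex H)) (d : hom (coprod n m) C).
Hypotheses (lc : left_connected_rule r) (D : @derivation Sg n m r G H mu C c k h rr d).
Local Notation lK := (copair (iL r) (oL r)).
Local Notation rK' := (copair (iR r) (oR r)).
Local Notation reachG := (connect (@estep _ (apex G))).

Let poL : pushout lK c mu k. Proof. by case: D. Qed.
Let poR : pushout rK' c rr h. Proof. by case: D. Qed.
Let dK := rK_discrete lc.
Let cI := derivation_inj_c lc D.

Lemma k_c q : hv k (hv c q) = hv mu (hv lK q).
Proof. exact: (esym (hvE (pushout_comm poL) q)). Qed.

Lemma reach_k_c ki ko : reachG (hv k (hv c (inl ki))) (hv k (hv c (inr ko))).
Proof. by rewrite !k_c; apply/hom_connect/connect_iL_oL. Qed.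

Lemma c_src q e : hv c q \in src e -> exists ko, q = inr ko.
Proof.
case: (D) => [[[_ maG _ _ _] _] _ _ _ _] s; apply: (lK_outdeg0 lc).
apply/outdeg0P => eL; apply/negP => sL.
have s1 : hv mu (hv lK q) \in src (he mu eL) by rewrite hom_src map_f.
have s2 : hv mu (hv lK q) \in src (he k e) by rewrite -k_c hom_src map_f.
exact: (dpushout_edges_disjoint dK poL (outdeg_le1 (maG.2 _).2 s1 s2)).
Qed.

Definition reached_from (c0 : hV C) (z : hV (apex H)) :=
  (exists c1, hv h c1 = z /\ reachG (hv k c0) (hv k c1)) \/
  (exists rho ki, [/\ hv rr rho = z, connect (@estep _ (rR r)) (hv (iR r) ki) rho
                    & reachG (hv k c0) (hv k (hv c (inl ki)))]).

Lemma reached_exit c0 c1 : reached_from c0 (hv h c1) ->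
  (forall q, hv c q = c1 -> exists ko, q = inr ko) -> reachG (hv k c0) (hv k c1).
Proof.
case=> [[c2 [E C2]]|[rho [ki [E _ CG]]]] out.
  case: (dpushout_eqr dK poR cI E) => [<- //|[q1 [q2 [Eq1 Eq2 Eq]]]].
  have [ko Eko] := out q2 (esym Eq2); subst q2.
  case: (rK_eq lc Eq) => [Eq'|[ki [ko' [Eq1' _]]]|[ki [ko' [_ //]]]].
    by rewrite Eq2 -Eq' -Eq1.
  by rewrite Eq2; apply: connect_trans (reach_k_c ki ko); rewrite -Eq1' -Eq1.
have [q [Eq1 _]] := dpushout_eqrl dK poR cI (esym E).
have [ko Eko] := out q (esym Eq1); subst q.
by rewrite Eq1; apply: connect_trans (reach_k_c ki ko).
Qed.

Lemma reached_step c0 z z' : reached_from c0 z -> estep z z' -> reached_from c0 z'.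
Proof.
move=> Uz /estepP [e [sz tz]].
case: (dpushout_cover_edges dK poR e) => [[eR <-]|[eC <-]] in sz tz *.
- rewrite hom_src in sz; rewrite hom_tgt in tz.
  case/mapP: sz => rho1 s1 Er1; case/mapP: tz => rho2 t2 Er2.
  right; exists rho2.
  have [ki [CR CG]] : exists ki, connect (@estep _ (rR r)) (hv (iR r) ki) rho1 /\
                                 reachG (hv k c0) (hv k (hv c (inl ki))).
    case: Uz => [[c1 [E C1]]|[rho [ki [E CR CG]]]]; rewrite Er1 in E.
      have [q [Eq1 Eq2]] := dpushout_eqrl dK poR cI E.
      have [ki Eki] : exists ki, q = inl ki by apply: (rK_src lc (e := eR)); rewrite -Eq2.
      by subst q; exists ki; rewrite Eq2 -Eq1.
    by have := dpushout_injl dK poR cI E => ?; subst rho; exists ki.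
  exists ki; split=> //; apply: connect_trans CR _; apply: connect1; apply/estepP.
  by exists eR.
- rewrite hom_src in sz; rewrite hom_tgt in tz.
  case/mapP: sz => c1 s1 Ec1; case/mapP: tz => c2 t2 Ec2.
  left; exists c2; split=> //; rewrite Ec1 in Uz.
  apply: connect_trans (reached_exit Uz _) _.
    by move=> q Eq; apply: (c_src (e := eC)); rewrite Eq.
  by apply/connect1/estepP; exists (he k eC); rewrite hom_src hom_tgt !map_f.
Qed.

Lemma derivation_reach x y :
  connect (@estep _ (apex H)) (hv (cin H) x) (hv (cout H) y) ->
  reachG (hv (cin G) x) (hv (cout G) y).
Proof.
case: (D) => [[[_ _ _ _ hoG] _] _ _ _ [/heqE dk /heqE dh]].
have /= <- := hvE dh (inl x); have /= <- := hvE dh (inr y).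
have /= <- := hvE dk (inl x); have /= <- := hvE dk (inr y).
set c0 := hv d (inl x); set cy := hv d (inr y).
have U0 : reached_from c0 (hv h c0) by left; exists c0.
move=> /connectP [p]; elim: p (hv h c0) U0 => [|z p IH] w Uw /=; last first.
  by case/andP=> s pth Ez; apply: IH (reached_step Uw s) pth Ez.
move=> _ Ew; rewrite -Ew in Uw; apply: (reached_exit Uw) => q Eq; apply: (lK_outdeg0 lc).
apply: (outdeg0_hom (f := mu)); rewrite -k_c Eq.
by have /= -> := hvE dk (inr y); apply/eqP/hoG; exists y.
Qed.

End DerivationReach.

Section FunctionalChains.
Variables (T : finType) (rho : rel T).
Hypotheses (rho_fun : forall u v v', rho u v -> rho u v' -> v = v')
           (rho_acyclic : forall u v, rho u v -> ~~ connect rho v u).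

Definition has_succ u := [exists v, rho u v].

Lemma connect_first u t : connect rho u t -> u != t -> exists2 v, rho u v & connect rho v t.
Proof.
case/connectP=> [[|x s]] /=; first by move=> _ ->; rewrite eqxx.
by case/andP=> ux px Et _; exists x => //; apply/connectP; exists s.
Qed.

Lemma connect_last t v : connect rho t v -> t != v -> exists2 u, connect rho t u & rho u v.
Proof.
case/connectP=> s; elim: s t => [|x s IH] t /=; first by move=> _ ->; rewrite eqxx.
case/andP=> tx px Ev ne; case: (eqVneq x v) => [<-|nxv]; first by exists t.
by have [u xu uv] := IH x px Ev nxv; exists u => //; apply: connect_trans xu; apply: connect1.
Qed.

Lemma symr_connect_sink t w : ~~ has_succ t -> connect (symr rho) w t -> connect rho w t.
Proof.
move=> nt; rewrite connect_symr_sym => /connectP [s]; elim/last_ind: s w => [|s x IH] w /=.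
  by move=> _ ->.
rewrite rcons_path last_rcons => /andP [ps sx] ->.
have c := IH _ ps erefl.
case/orP: sx => [l|r]; last by apply: connect_trans c; apply: connect1.
have ne : last t s != t by apply: contraNneq nt => <-; apply/existsP; exists x.
by have [v /(rho_fun l) -> vt] := connect_first c ne.
Qed.

Lemma sink_connect_uniq t1 t2 :
  ~~ has_succ t1 -> ~~ has_succ t2 -> connect (symr rho) t1 t2 -> t1 = t2.
Proof.
move=> n1 n2 /(symr_connect_sink n2) c; apply/eqP/negPn/negP => ne.
by have [v lv _] := connect_first c ne; move/negP: n1; apply; apply/existsP; exists v.
Qed.

Lemma connect_sink a : exists2 t, connect rho a t & ~~ has_succ t.
Proof.
move: {2}#|[pred w | connect rho a w]| (leqnn #|[pred w | connect rho a w]|) => k.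
elim: k a => [|k IH] a le.
  by move: le; rewrite leqn0 => /eqP/card0_eq/(_ a); rewrite inE connect0.
case: (boolP (has_succ a)) => [/existsP [a' aa']|na]; last by exists a.
have sub : [pred w | connect rho a' w] \proper [pred w | connect rho a w].
  apply/properP; split; last by exists a; rewrite !inE ?connect0 // rho_acyclic.
  by apply/subsetP => w; rewrite !inE; apply: connect_trans; apply: connect1.
have [t c nt] := IH a' (leq_trans (proper_card sub) le).
by exists t => //; apply: connect_trans c; apply: connect1.
Qed.

End FunctionalChains.

Section InjectiveChains.
Variables (T : finType) (rho : rel T).
Hypotheses (rho_inj : forall u u' v, rho u v -> rho u' v -> u = u')
           (rho_acyclic : forall u v, rho u v -> ~~ connect rho v u).

Let rho' : rel T := fun x y => rho y x.

Definition has_pred v := [exists u, rho u v].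

Let rho'_fun u v v' : rho' u v -> rho' u v' -> v = v'.
Proof. exact: rho_inj. Qed.

Let connect_rho' x y : connect rho' x y = connect rho y x.
Proof. exact: connect_rev. Qed.

Let rho'_acyclic u v : rho' u v -> ~~ connect rho' v u.
Proof. by rewrite connect_rho'; apply: rho_acyclic. Qed.

Let connect_symr_rev : connect (symr rho') =2 connect (symr rho).
Proof. by apply: eq_connect => x y; rewrite /symr orbC. Qed.

Lemma symr_connect_source t w : ~~ has_pred t -> connect (symr rho) t w -> connect rho t w.
Proof.
move=> nt; rewrite connect_symr_sym -connect_symr_rev -connect_rho'.
exact (symr_connect_sink rho'_fun nt).
Qed.

Lemma source_connect_uniq t1 t2 :
  ~~ has_pred t1 -> ~~ has_pred t2 -> connect (symr rho) t1 t2 -> t1 = t2.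
Proof.
move=> n1 n2; rewrite -connect_symr_rev => c.
exact (sink_connect_uniq rho'_fun n1 n2 c).
Qed.

Lemma connect_source a : exists2 t, connect rho t a & ~~ has_pred t.
Proof. by have [t] := connect_sink rho'_acyclic a; rewrite connect_rho'; exists t. Qed.

End InjectiveChains.

(* [P] is a partial bijection from inputs to outputs; [wglue P W] relates each glued
   input of the cospan [W] to its output. *)
Section Gluing.
Variables (Sg : signature) (n m : hyp Sg) (P : {set hV n * hV m}).
Hypothesis P_uniq : forall p q, p \in P -> q \in P -> p.1 = q.1 \/ p.2 = q.2 -> p = q.

Definition glue_rel (C : hyp Sg) (d : hom (coprod n m) C) : rel (hV C) :=
  fun a b => [exists p in P, (a == hv d (inl p.1)) && (b == hv d (inr p.2))].

Lemma glue_relP C (d : hom (coprod n m) C) a b :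
  reflect (exists2 p, p \in P & a = hv d (inl p.1) /\ b = hv d (inr p.2)) (glue_rel d a b).
Proof.
apply: (iffP existsP) => [[p /andP [pP /andP [/eqP -> /eqP ->]]]|[p pP [-> ->]]].
  by exists p.
by exists p; rewrite pP !eqxx.
Qed.

Lemma glue_rel_hcomp C D (d : hom (coprod n m) C) (k : hom C D) a b :
  glue_rel d a b -> glue_rel (hcomp d k) (hv k a) (hv k b).
Proof. by case/glue_relP=> p pP [-> ->]; apply/glue_relP; exists p. Qed.

Lemma glue_rel_hcompP C D (d : hom (coprod n m) C) (k : hom C D) a' b' :
  glue_rel (hcomp d k) a' b' -> exists a b, [/\ glue_rel d a b, a' = hv k a & b' = hv k b].
Proof.
case/glue_relP=> p pP [-> ->]; exists (hv d (inl p.1)), (hv d (inr p.2)).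
by split=> //; apply/glue_relP; exists p.
Qed.

Definition glued_in x := [exists p in P, p.1 == x].
Definition glued_out y := [exists p in P, p.2 == y].

Section Cospan.
Variable W : cospan n m.
Local Notation V := (hV (apex W)).
Local Notation ci := (hv (cin W)).
Local Notation co := (hv (cout W)).
Local Notation E := (@estep _ (apex W)).

Definition wglue := glue_rel (copair (cin W) (cout W)).

(* [p] precedes [q] when, after gluing, the glued node of [p] reaches that of [q]. *)
Definition chain_rel : rel (hV n * hV m) :=
  fun p q => [&& p \in P, q \in P & connect E (ci p.1) (co q.2)].

Definition chain_acyclic := forall p q, chain_rel p q -> ~~ connect chain_rel q p.

Lemma wglueP a b : reflect (exists2 p, p \in P & a = ci p.1 /\ b = co p.2) (wglue a b).
Proof. exact (glue_relP (copair (cin W) (cout W)) a b). Qed.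

Hypotheses (maW : is_ma_cospan (cin W) (cout W)) (acW : chain_acyclic).

Lemma chain_rel_cycle p q : chain_rel p q -> ~ connect chain_rel q p.
Proof. by move=> pq; apply/negP/acW. Qed.

Lemma ci_inj : injective ci. Proof. by case: maW => _ _ [[]]. Qed.
Lemma co_inj : injective co. Proof. by case: maW => _ _ [_ []]. Qed.
Lemma ci_indeg0 x : indeg (ci x) = 0. Proof. by case: maW => _ _ _ hi _; apply/hi; exists x. Qed.
Lemma co_outdeg0 y : outdeg (co y) = 0. Proof. by case: maW => _ _ _ _ ho; apply/ho; exists y. Qed.
Lemma maW_apex : ma (apex W). Proof. by case: maW. Qed.

Lemma wglue_fun u v v' : wglue u v -> wglue u v' -> v = v'.
Proof.
move=> /wglueP [p pP [-> ->]] /wglueP [q qP [/ci_inj E1 ->]].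
by rewrite (P_uniq pP qP (or_introl E1)).
Qed.

Lemma wglue_inj u u' v : wglue u v -> wglue u' v -> u = u'.
Proof.
move=> /wglueP [p pP [-> ->]] /wglueP [q qP [-> /co_inj E1]].
by rewrite (P_uniq pP qP (or_intror E1)).
Qed.

Lemma connect_wglue_out p w : p \in P -> connect wglue (co p.2) w ->
  w = co p.2 \/ exists2 q, q \in P & w = co q.2 /\ connect chain_rel q p.
Proof.
move=> pP /connectP [s]; elim/last_ind: s w => [|s x IH] w /=; first by move=> _ ->; left.
rewrite rcons_path last_rcons => /andP [ps /wglueP [p1 p1P [E1 ->]]] ->; right; exists p1 => //.
split=> //; case: (IH _ ps erefl) => [Ep|[q qP [Eq cq]]].
  by apply: connect1; rewrite /chain_rel p1P pP /= -E1 Ep connect0.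
by apply: connect_trans cq; apply: connect1; rewrite /chain_rel p1P qP /= -E1 Eq connect0.
Qed.

Lemma wglue_acyclic u v : wglue u v -> ~~ connect wglue v u.
Proof.
move=> /wglueP [p pP [-> ->]]; apply/negP => /(connect_wglue_out pP) [Ep|[q qP [Eq cq]]].
  by apply: (@chain_rel_cycle p p); rewrite ?connect0 // /chain_rel pP /= Ep connect0.
by apply: (@chain_rel_cycle p q); rewrite // /chain_rel pP qP /= Eq connect0.
Qed.

Lemma has_succ_indeg0 a : has_succ wglue a -> indeg a = 0.
Proof. by case/existsP=> b /wglueP [p _ [-> _]]; apply: ci_indeg0. Qed.

Lemma has_pred_outdeg0 b : has_pred wglue b -> outdeg b = 0.
Proof. by case/existsP=> a /wglueP [p _ [_ ->]]; apply: co_outdeg0. Qed.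

Lemma has_succ_ci x : has_succ wglue (ci x) = glued_in x.
Proof.
apply/existsP/existsP => [[b /wglueP [p pP [/ci_inj -> _]]]|[p /andP [pP /eqP <-]]].
  by exists p; rewrite pP eqxx.
by exists (co p.2); apply/wglueP; exists p.
Qed.

Lemma has_pred_co y : has_pred wglue (co y) = glued_out y.
Proof.
apply/existsP/existsP => [[b /wglueP [p pP [_ /co_inj ->]]]|[p /andP [pP /eqP <-]]].
  by exists p; rewrite pP eqxx.
by exists (ci p.1); apply/wglueP; exists p.
Qed.

(* Paths of the glued graph lift to [glued_step]-paths of [W]. *)
Definition glued_step : rel V := fun a b => E a b || wglue b a.

Lemma glued_connect_split a b : connect glued_step a b -> connect E a b \/
  exists p q, [/\ p \in P, q \in P, connect E a (co p.2), connect chain_rel p q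
                & connect E (ci q.1) b].
Proof.
case/connectP=> s; elim/last_ind: s b => [|s x IH] b /=; first by move=> _ ->; left.
rewrite rcons_path last_rcons => /andP [ps sx] ->.
case: (IH _ ps erefl) => [c|[p [q [pP qP c1 c2 c3]]]];
  case/orP: sx => [st|/wglueP [p' p'P [-> Ex]]].
- by left; apply: connect_trans c (connect1 st).
- by right; exists p', p'; split=> //; rewrite -Ex.
- by right; exists p, q; split=> //; apply: connect_trans c3 (connect1 st).
- right; exists p, p'; split=> //; apply: connect_trans c2 _; apply: connect1.
  by rewrite /chain_rel qP p'P /= -Ex.
Qed.

Lemma estep_no_glued_return s t : E s t -> ~~ connect glued_step t s.
Proof.
move=> st; apply/negP => /glued_connect_split [c|[p [q [pP qP c1 c2 c3]]]].
  by have := ma_acyclic s maW_apex; rewrite (reach1_catr (estep_reach1 st) c).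
apply: (@chain_rel_cycle q p) c2; rewrite /chain_rel qP pP /=.
exact: connect_trans c3 (connect_trans (connect1 st) c1).
Qed.

Lemma connect_wglue_rev a b : connect wglue a b -> connect glued_step b a.
Proof.
case/connectP=> s; elim: s a => [|x s IH] a /=; first by move=> _ ->.
case/andP=> ax px Eb; apply: connect_trans (IH x px Eb) (connect1 _).
by rewrite /glued_step ax orbT.
Qed.

Local Notation W' := (nquot wglue).
Local Notation q := (nclass wglue).

Lemma estep_glued (u u' : hV W') : estep u u' -> exists s t, [/\ E s t, q s = u & q t = u'].
Proof.
case/estepP=> e [/mapP [s se ->] /mapP [t te ->]]; exists s, t; split=> //.
by apply/estepP; exists e.
Qed.

Lemma estep_no_pred s t : E s t -> ~~ has_pred wglue s.
Proof.
move=> /estepP [e [se _]]; apply/negP => /has_pred_outdeg0/eqP/outdeg0P/(_ e).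
by rewrite se.
Qed.

Lemma glued_connect_lift x0 y : connect (@estep _ W') (q x0) (q y) ->
  exists w, connect glued_step x0 w /\ q w = q y.
Proof.
case/connectP=> s; elim/last_ind: s y => [|s x IH] y /=.
  by move=> _ /esym Ey; exists x0; split.
rewrite rcons_path last_rcons => /andP [ps sx] Ey.
have [w [c Ew]] := IH (val (last (q x0) s)) ps (nclassK (last (q x0) s)).
have [s1 [t1 [st E1 E2]]] := estep_glued sx.
exists t1; split; last by rewrite E2 Ey.
have cw : connect wglue s1 w.
  by apply: (symr_connect_source wglue_inj (estep_no_pred st)); rewrite -nclass_eq E1 Ew nclassK.
apply: connect_trans (connect_trans c (connect_wglue_rev cw)) (connect1 _).
by rewrite /glued_step st.
Qed.

Lemma glue_no_cycle (u : hV W') : ~~ reach1 u u.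
Proof.
apply/negP => /existsP [u1 /andP [/estep_glued [s [t [st <- <-]]] c]].
have [w [cw Ew]] := glued_connect_lift c.
have cs : connect wglue s w.
  by apply: (symr_connect_source wglue_inj (estep_no_pred st)); rewrite -nclass_eq Ew.
by move/negP: (estep_no_glued_return st); apply; apply: connect_trans cw (connect_wglue_rev cs).
Qed.

Lemma glue_indeg u :
  exists2 t, q t = q u & indeg (hv (nquot_map wglue) u) = indeg t.
Proof.
apply: (incdeg_map_fibre (inc := @tgt _ (apex W))) => w1 w2 i1 i2 /eqP.
rewrite nclass_eq; apply: (sink_connect_uniq wglue_fun);
by apply/negP => /has_succ_indeg0/eqP; apply/negP; rewrite -lt0n; first [exact: i1 | exact: i2].
Qed.

Lemma glue_outdeg u :
  exists2 t, q t = q u & outdeg (hv (nquot_map wglue) u) = outdeg t.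
Proof.
apply: (incdeg_map_fibre (inc := @src _ (apex W))) => w1 w2 o1 o2 /eqP.
rewrite nclass_eq; apply: (source_connect_uniq wglue_inj);
by apply/negP => /has_pred_outdeg0/eqP; apply/negP; rewrite -lt0n; first [exact: o1 | exact: o2].
Qed.

Lemma glue_ma : ma W'.
Proof.
split; first by case/cycle_reach1 => u; apply/negP; apply: glue_no_cycle.
move=> u; rewrite -(nclassK u); have [t _ ->] := glue_indeg (val u).
by have [t' _ ->] := glue_outdeg (val u); split; [case: (maW_apex.2 t) | case: (maW_apex.2 t')].
Qed.

Lemma glue_indeg0 (u : hV W') : indeg u = 0 <-> exists2 x, ~~ glued_in x & q (ci x) = u.
Proof.
split.
  move=> iu; have [t ct nt] := connect_sink wglue_acyclic (val u).
  have Et : q t = u.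
    by rewrite -(nclassK u); apply/eqP; rewrite nclass_eq connect_symr_sym connect_symr.
  have it : indeg t = 0.
    by apply/eqP/(indeg0_hom (f := nquot_map wglue)); rewrite /= Et iu.
  case: maW => _ _ _ hi _; have [x Ex] := (hi t).1 it.
  by exists x; rewrite -?has_succ_ci Ex.
case=> x nx <-; have [t ct ->] := glue_indeg (ci x).
case: (boolP (has_succ wglue t)) => [/has_succ_indeg0 //|nt].
move/eqP: ct; rewrite nclass_eq => ct.
by rewrite (sink_connect_uniq wglue_fun nt _ ct) ?ci_indeg0 // has_succ_ci.
Qed.

Lemma glue_outdeg0 (u : hV W') : outdeg u = 0 <-> exists2 y, ~~ glued_out y & q (co y) = u.
Proof.
split.
  move=> ou; have [t ct nt] := connect_source wglue_acyclic (val u).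
  have Et : q t = u by rewrite -(nclassK u); apply/eqP; rewrite nclass_eq connect_symr.
  have ot : outdeg t = 0.
    by apply/eqP/(outdeg0_hom (f := nquot_map wglue)); rewrite /= Et ou.
  case: maW => _ _ _ _ ho; have [y Ey] := (ho t).1 ot.
  by exists y; rewrite -?has_pred_co Ey.
case=> y ny <-; have [t ct ->] := glue_outdeg (co y).
case: (boolP (has_pred wglue t)) => [/has_pred_outdeg0 //|nt].
move/eqP: ct; rewrite nclass_eq => ct.
by rewrite (source_connect_uniq wglue_inj nt _ ct) ?co_outdeg0 // has_pred_co.
Qed.

Lemma glue_in_inj x1 x2 : ~~ glued_in x1 -> ~~ glued_in x2 -> q (ci x1) = q (ci x2) -> x1 = x2.
Proof.
move=> n1 n2 /eqP; rewrite nclass_eq => c; apply: ci_inj.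
by apply: (sink_connect_uniq wglue_fun) c; rewrite has_succ_ci.
Qed.

Lemma glue_out_inj y1 y2 : ~~ glued_out y1 -> ~~ glued_out y2 -> q (co y1) = q (co y2) -> y1 = y2.
Proof.
move=> n1 n2 /eqP; rewrite nclass_eq => c; apply: co_inj.
by apply: (source_connect_uniq wglue_inj) c; rewrite has_pred_co.
Qed.

Section Match.
Variables (L : hyp Sg) (mu : hom L (apex W)).
Hypotheses (mu_mono : mono mu) (maL : ma L) (scL : strongly_connected L).

(* A node of the match glued to another one would be an input of [L] that reaches, in
   [L], the output glued onto it: a cycle in the glued graph. *)
Lemma glue_match_succ a b : has_succ wglue (hv mu a) -> connect (symr wglue) (hv mu a) (hv mu b) ->
  a = b.
Proof.
move=> sa c; apply: mu_mono.1.
have ia : indeg a = 0 by apply/eqP/(indeg0_hom (f := mu)); rewrite has_succ_indeg0.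
have oa : outdeg (hv mu a) != 0.
  exact: contra (@outdeg0_hom _ _ _ mu a) (outdeg_indeg0 maL scL ia).
have cr : connect wglue (hv mu a) (hv mu b).
  by apply: (symr_connect_source wglue_inj) c; apply: contra oa => /has_pred_outdeg0 ->.
case: (eqVneq (hv mu a) (hv mu b)) => // ne.
have [u _ ub] := connect_last cr ne.
have ob : outdeg b = 0.
  by apply/eqP/(outdeg0_hom (f := mu)); rewrite has_pred_outdeg0 //; apply/existsP; exists u.
have [p Pp] := scL ia ob.
case/existsP: (hom_reach1 mu (path_from_reach1 Pp)) => t /andP [st ct].
move/negP: (estep_no_glued_return st); case.
apply: connect_trans (connect_wglue_rev cr).
by apply: connect_sub ct => x y xy; apply: connect1; rewrite /glued_step xy.
Qed.

Lemma glue_mono : mono (hcomp mu (nquot_map wglue)).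
Proof.
split=> [a b /= /eqP|e1 e2 /=]; last exact: mu_mono.2.
rewrite nclass_eq => c.
case: (boolP (has_succ wglue (hv mu a))) => [sa|na]; first exact: glue_match_succ sa c.
case: (boolP (has_succ wglue (hv mu b))) => [sb|nb].
  by apply/esym/glue_match_succ => //; rewrite connect_symr_sym.
by apply: mu_mono.1; apply: (sink_connect_uniq wglue_fun).
Qed.

End Match.

End Cospan.
End Gluing.

Arguments wglue {Sg n m} P W.

(* The glued cospan, with new interfaces [Vi] and [Vo] enumerating the inputs and the
   outputs that are not glued. *)
Section GluedCospan.
Variables (Sg : signature) (n m : hyp Sg) (P : {set hV n * hV m}).
Hypothesis P_uniq : forall p q, p \in P -> q \in P -> p.1 = q.1 \/ p.2 = q.2 -> p = q.
Variables (Vi Vo : finType) (si : Vi -> hV n) (so : Vo -> hV m).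
Hypotheses (si_inj : injective si) (so_inj : injective so)
  (si_im : forall x, ~~ glued_in P x <-> exists x', si x' = x)
  (so_im : forall y, ~~ glued_out P y <-> exists y', so y' = y).
Local Notation n' := (discrete_of Sg Vi).
Local Notation m' := (discrete_of Sg Vo).

Definition glue_cospan (W : cospan n m) : cospan n' m' :=
  @Cospan Sg n' m' (nquot (wglue P W))
    (discrete_hom (fun x' => hv (nquot_map (wglue P W)) (hv (cin W) (si x'))))
    (discrete_hom (fun y' => hv (nquot_map (wglue P W)) (hv (cout W) (so y')))).

Lemma glue_cospan_ma (W : cospan n m) : is_ma_cospan (cin W) (cout W) -> chain_acyclic P W ->
  is_ma_cospan (cin (glue_cospan W)) (cout (glue_cospan W)).
Proof.
move=> maW acW; split.
- by split; apply: discrete_ofP.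
- exact: glue_ma.
- split; split=> [x1 x2 /= E|[]].
  + by apply: si_inj; apply: (glue_in_inj P_uniq maW _ _ E); apply/si_im; [exists x1 | exists x2].
  + by apply: so_inj; apply: (glue_out_inj P_uniq maW _ _ E); apply/so_im; [exists x1 | exists x2].
- move=> u; split; first by case/(glue_indeg0 P_uniq maW acW)=> x /si_im [x' <-] <-; exists x'.
  case=> x' <-; apply/(glue_indeg0 P_uniq maW acW).
  by exists (si x') => //; apply/si_im; exists x'.
- move=> u; split; first by case/(glue_outdeg0 P_uniq maW acW)=> y /so_im [y' <-] <-; exists y'.
  case=> y' <-; apply/(glue_outdeg0 P_uniq maW acW).
  by exists (so y') => //; apply/so_im; exists y'.
Qed.

Section GlueHom.
Variables (W1 W2 : cospan n m) (phi : hom (apex W1) (apex W2)).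
Hypotheses (ei : hcomp (cin W1) phi = cin W2) (eo : hcomp (cout W1) phi = cout W2).

Lemma glue_hom_resp a b : wglue P W1 a b ->
  hv (hcomp phi (nquot_map (wglue P W2))) a = hv (hcomp phi (nquot_map (wglue P W2))) b.
Proof.
by case/wglueP=> p pP [-> ->]; apply: nquot_map_rel; apply/wglueP; exists p => //; rewrite -ei -eo.
Qed.

Definition glue_hom : hom (apex (glue_cospan W1)) (apex (glue_cospan W2)) :=
  nquot_lift glue_hom_resp.

Lemma glue_homK : hcomp (nquot_map (wglue P W1)) glue_hom = hcomp phi (nquot_map (wglue P W2)).
Proof. exact: nquot_liftK. Qed.

End GlueHom.

Lemma glue_cospan_iso (W1 W2 : cospan n m) :
  cospan_iso W1 W2 -> cospan_iso (glue_cospan W1) (glue_cospan W2).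
Proof.
case=> phi [psi [/heqE p1 /heqE p2 /heqE i1 /heqE o1]].
have i2 : hcomp (cin W2) psi = cin W1 by rewrite -i1 hcompA p1 hcomph1.
have o2 : hcomp (cout W2) psi = cout W1 by rewrite -o1 hcompA p1 hcomph1.
have K1 : hcomp (glue_hom i1 o1) (glue_hom i2 o2) = hid _.
  apply: (@nquot_map_epi _ _ _ (wglue P W1)).
  by rewrite -hcompA glue_homK hcompA glue_homK -hcompA p1 hcomp1h hcomph1.
have K2 : hcomp (glue_hom i2 o2) (glue_hom i1 o1) = hid _.
  apply: (@nquot_map_epi _ _ _ (wglue P W2)).
  by rewrite -hcompA glue_homK hcompA glue_homK -hcompA p2 hcomp1h hcomph1.
exists (glue_hom i1 o1), (glue_hom i2 o2); rewrite K1 K2; split; try exact: heq_refl.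
- split=> [x|[]] /=; have /= -> := hvE (glue_homK i1 o1) (hv (cin W1) (si x)).
  by rewrite -i1.
- split=> [y|[]] /=; have /= -> := hvE (glue_homK i1 o1) (hv (cout W1) (so y)).
  by rewrite -o1.
Qed.

Lemma chain_acyclic_sub (W1 W2 : cospan n m) :
  (forall x y, connect (@estep _ (apex W2)) (hv (cin W2) x) (hv (cout W2) y) ->
               connect (@estep _ (apex W1)) (hv (cin W1) x) (hv (cout W1) y)) ->
  chain_acyclic P W1 -> chain_acyclic P W2.
Proof.
move=> sub21 ac1 p q pq; apply/negP => qp.
have sub : subrel (chain_rel P W2) (chain_rel P W1).
  by move=> a b /and3P [aP bP c]; rewrite /chain_rel aP bP sub21.
move/negP: (ac1 p q (sub _ _ pq)); apply.
by apply: connect_sub qp => a b /sub /connect1.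
Qed.

(* [k] stands for either side [C -> G] or [C -> H] of a derivation. *)
Section GlueSide.
Variables (C : hyp Sg) (d : hom (coprod n m) C) (W : cospan n m) (k : hom C (apex W)).
Hypothesis dk : hcomp d k = copair (cin W) (cout W).

Lemma glue_rel_side a b : glue_rel P d a b -> wglue P W (hv k a) (hv k b).
Proof. by move/(glue_rel_hcomp k); rewrite dk. Qed.

Lemma glue_rel_sideP a' b' : wglue P W a' b' ->
  exists a b, [/\ glue_rel P d a b, a' = hv k a & b' = hv k b].
Proof. by rewrite /wglue -dk; apply: glue_rel_hcompP. Qed.

Lemma glue_side_pushout :
  pushout k (nquot_map (glue_rel P d)) (nquot_map (wglue P W)) (nquot_hom glue_rel_side).
Proof. exact: (nquot_pushout glue_rel_side glue_rel_sideP). Qed.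

Definition glue_interface : hom (coprod n' m') (nquot (glue_rel P d)) :=
  copair (discrete_hom (fun x' => hv (nquot_map (glue_rel P d)) (hv d (inl (si x')))))
         (discrete_hom (fun y' => hv (nquot_map (glue_rel P d)) (hv d (inr (so y'))))).

Lemma glue_interfaceK : heq (hcomp glue_interface (nquot_hom glue_rel_side))
                           (copair (cin (glue_cospan W)) (cout (glue_cospan W))).
Proof.
split=> [[x|y]|[[]|[]]] /=; have /= -> := hvE (nquot_homK glue_rel_side) (hv d _).
  by have /= -> := hvE dk (inl (si x)).
by have /= -> := hvE dk (inr (so y)).
Qed.

End GlueSide.

Lemma derivation_glue (r : rule Sg) (W1 W2 : cospan n m) mu C c k h rr d :
  left_connected_rule r -> @derivation Sg n m r W1 W2 mu C c k h rr d ->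
  chain_acyclic P W1 -> chain_acyclic P W2 ->
  exists C' c' k' h' rr' d', @derivation Sg n' m' r (glue_cospan W1) (glue_cospan W2)
                               (hcomp mu (nquot_map (wglue P W1))) C' c' k' h' rr' d'.
Proof.
move=> lc [[mW1 mW2] [mmu _] sq1 sq2 [/heqE dk /heqE dh]] ac1 ac2.
exists (nquot (glue_rel P d)), (hcomp c (nquot_map (glue_rel P d))),
  (nquot_hom (glue_rel_side dk)), (nquot_hom (glue_rel_side dh)),
  (hcomp rr (nquot_map (wglue P W2))), (glue_interface d).
case: lc => [[_ maL _ _ _] _ _ scL]; split.
- by split; apply: glue_cospan_ma.
- exact: mono_convex (glue_mono P_uniq mW1 ac1 mmu maL scL) (glue_ma P_uniq mW1 ac1) scL.
- exact: pushout_paste sq1 (glue_side_pushout dk).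
- exact: pushout_paste sq2 (glue_side_pushout dh).
- by split; apply: glue_interfaceK.
Qed.

Section System.
Variables (Idx : finType) (Rs : Idx -> rule Sg) (HR : forall i, left_connected_rule (Rs i)).
Local Notation gl := glue_cospan.

Lemma step_glue (W1 W2 : cospan n m) : step Rs W1 W2 -> chain_acyclic P W1 ->
  step Rs (gl W1) (gl W2) /\ chain_acyclic P W2.
Proof.
case=> i [mu [C [c [k [h [rr [d D]]]]]]] ac1.
have ac2 := chain_acyclic_sub (derivation_reach (HR i) D) ac1.
have [C' [c' [k' [h' [rr' [d' D']]]]]] := derivation_glue (HR i) D ac1 ac2.
by split=> //; exists i, (hcomp mu (nquot_map (wglue P W1))), C', c', k', h', rr', d'.
Qed.

Lemma rewrites_glue (W1 W2 : cospan n m) : rewrites Rs W1 W2 -> chain_acyclic P W1 ->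
  rewrites Rs (gl W1) (gl W2) /\ chain_acyclic P W2.
Proof.
elim=> [G|G H K s _ IH] ac; first by split=> //; apply: rw_refl.
have [s' acH] := step_glue s ac; have [r' acK] := IH acH.
by split=> //; apply: rw_step r'.
Qed.

Lemma joinable_glue (H1 H2 : cospan n m) : joinable Rs H1 H2 ->
  chain_acyclic P H1 -> chain_acyclic P H2 -> joinable Rs (gl H1) (gl H2).
Proof.
case=> W1 [W2 [R1 R2 I]] ac1 ac2.
have [R1' _] := rewrites_glue R1 ac1; have [R2' _] := rewrites_glue R2 ac2.
by exists (gl W1), (gl W2); split=> //; apply: glue_cospan_iso.
Qed.

End System.
End GluedCospan.

(* [S'] is the gluing of the cospan [in(S) -> S <- out(S)] along the pairs of [N]. *)
Section NodeGluing.
Variables (Sg : signature) (S S' : hyp Sg) (N : {set hV S * hV S}) (eps' : hom S S').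
Hypotheses (Heps' : node_coeq N eps')
  (N_pairs : forall a b, (a, b) \in N -> [/\ indeg a = 0, outdeg b = 0 & outdeg a != 0])
  (N_uniq : forall p q x, p \in N -> q \in N -> (x = p.1 \/ x = p.2) ->
                          (x = q.1 \/ x = q.2) -> p = q)
  (maS : is_ma_cospan (inIncl S) (outIncl S)) (maS' : ma S').

Local Notation n := (inD S).
Local Notation m := (outD S).

Definition NP : {set hV n * hV m} := [set p | (val p.1, val p.2) \in N].

Lemma NP_uniq p q : p \in NP -> q \in NP -> p.1 = q.1 \/ p.2 = q.2 -> p = q.
Proof.
rewrite !inE => pN qN pq.
have : (val p.1, val p.2) = (val q.1, val q.2).
  case: pq => E.
    by apply: (N_uniq pN qN (or_introl (erefl (val p.1)))); rewrite E; left.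
  by apply: (N_uniq pN qN (or_intror (erefl (val p.2)))); rewrite E; right.
by case: p q {pN qN pq} => [a b] [c d] [/val_inj -> /val_inj ->].
Qed.

Local Notation rS := (wglue NP (ioCospan S)).

Lemma rS_N a b : rS a b = ((a, b) \in N).
Proof.
apply/wglueP/idP => [[p pP [-> ->]]|abN]; first by move: pP; rewrite inE.
have [ia ob _] := N_pairs abN.
by exists (exist _ a (introT eqP ia), exist _ b (introT eqP ob)); rewrite ?inE.
Qed.

Lemma eps'_resp a b : rS a b -> hv eps' a = hv eps' b.
Proof. by rewrite rS_N; case: Heps' => [[resp _] _]; apply: resp. Qed.

Definition theta : hom (nquot rS) S' := nquot_lift eps'_resp.

Lemma thetaK : hcomp (nquot_map rS) theta = eps'.
Proof. exact: nquot_liftK. Qed.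

Lemma theta_iso : iso theta.
Proof.
case: Heps' => eps'_resp' U.
have resp : respects (fun x y => (x, y) \in N) (fun _ _ => False) (nquot_map rS).
  by split=> // x y xyN; apply: nquot_map_rel; rewrite rS_N.
have [theta' [/heqE E _]] := U _ _ resp; exists theta'; split.
  by apply: (@nquot_map_epi _ _ _ rS); rewrite -hcompA thetaK E hcomph1.
have [w [_ Uw]] := U _ _ eps'_resp'.
rewrite (heqE (Uw (hid _) _)); last by split.
by apply: heqE; apply: Uw; rewrite -hcompA E thetaK; split.
Qed.

Lemma theta_inj : injective (hv theta).
Proof. exact/bij_inj/iso_bij_nodes/theta_iso. Qed.

(* A chain [p_1 < ... < p_k < p_1] would become a cycle of [S'] once glued. *)
Lemma chain_acyclic_S : chain_acyclic NP (ioCospan S).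
Proof.
have step p q : chain_rel NP (ioCospan S) p q ->
    reach1 (hv (nquot_map rS) (val p.1)) (hv (nquot_map rS) (val q.1)).
  case/and3P=> + + c; rewrite !inE => pP qP.
  have [_ _ op] := N_pairs pP; have [_ oq _] := N_pairs qP.
  have ne : val p.1 != val q.2 by apply: contraNneq op => ->; rewrite oq.
  have -> : hv (nquot_map rS) (val q.1) = hv (nquot_map rS) (val q.2).
    by apply: nquot_map_rel; rewrite rS_N.
  exact: hom_reach1 (connect_reach1 c ne).
move=> p q pq; apply/negP => qp.
have qp' : connect (@estep _ (nquot rS))
              (hv (nquot_map rS) (val q.1)) (hv (nquot_map rS) (val p.1)).
  case/connectP: qp => s; elim: s q {pq} => [|x s IH] q' /=; first by move=> _ ->.
  by case/andP=> cx px El; apply: connect_trans (reach1_connect (step _ _ cx)) (IH _ px El).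
have := ma_acyclic (hv theta (hv (nquot_map rS) (val p.1))) maS'.
by rewrite (hom_reach1 theta (reach1_catr (step _ _ pq) qp')).
Qed.

Local Notation Vi := {v : hV S' | indeg v == 0}.
Local Notation Vo := {v : hV S' | outdeg v == 0}.

Let S_indeg0 := glue_indeg0 (W := ioCospan S) NP_uniq maS chain_acyclic_S.
Let S_outdeg0 := glue_outdeg0 (W := ioCospan S) NP_uniq maS chain_acyclic_S.
Let S_in_inj := glue_in_inj (W := ioCospan S) NP_uniq maS.
Let S_out_inj := glue_out_inj (W := ioCospan S) NP_uniq maS.

Lemma in_lift_ex (x' : Vi) :
  exists x : hV n, ~~ glued_in NP x && (hv theta (hv (nquot_map rS) (val x)) == val x').
Proof.
have [psi psiK thetaK'] := iso_bij_nodes theta_iso.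
have iu : indeg (psi (val x')) = 0.
  by rewrite -(indeg_iso _ theta_iso) thetaK'; apply/eqP/(valP x').
have [x nx Ex] := (S_indeg0 (psi (val x'))).1 iu.
by exists x; rewrite nx /=; apply/eqP; rewrite -[val x']thetaK' -Ex.
Qed.

Lemma out_lift_ex (y' : Vo) :
  exists y : hV m, ~~ glued_out NP y && (hv theta (hv (nquot_map rS) (val y)) == val y').
Proof.
have [psi psiK thetaK'] := iso_bij_nodes theta_iso.
have ou : outdeg (psi (val y')) = 0.
  by rewrite -(outdeg_iso _ theta_iso) thetaK'; apply/eqP/(valP y').
have [y ny Ey] := (S_outdeg0 (psi (val y'))).1 ou.
by exists y; rewrite ny /=; apply/eqP; rewrite -[val y']thetaK' -Ey.
Qed.

Definition in_lift (x' : Vi) : hV n := xchoose (in_lift_ex x').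
Definition out_lift (y' : Vo) : hV m := xchoose (out_lift_ex y').

Lemma in_liftP x' :
  ~~ glued_in NP (in_lift x') /\ hv theta (hv (nquot_map rS) (val (in_lift x'))) = val x'.
Proof. by have /andP [? /eqP] := xchooseP (in_lift_ex x'). Qed.

Lemma out_liftP y' :
  ~~ glued_out NP (out_lift y') /\ hv theta (hv (nquot_map rS) (val (out_lift y'))) = val y'.
Proof. by have /andP [? /eqP] := xchooseP (out_lift_ex y'). Qed.

Lemma in_lift_inj : injective in_lift.
Proof. by move=> x1 x2 E; apply: val_inj; rewrite -(in_liftP x1).2 -(in_liftP x2).2 E. Qed.

Lemma out_lift_inj : injective out_lift.
Proof. by move=> y1 y2 E; apply: val_inj; rewrite -(out_liftP y1).2 -(out_liftP y2).2 E. Qed.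

Lemma in_lift_im x : ~~ glued_in NP x <-> exists x', in_lift x' = x.
Proof.
split; last by case=> x' <-; exact: (in_liftP x').1.
move=> nx; set v := hv theta (hv (nquot_map rS) (val x)).
have iv : indeg v == 0.
  rewrite /v (indeg_iso _ theta_iso); apply/eqP/S_indeg0.
  by exists x.
exists (exist _ v iv); apply: S_in_inj => //; first exact: (in_liftP _).1.
by apply: theta_inj; rewrite (in_liftP _).2.
Qed.

Lemma out_lift_im y : ~~ glued_out NP y <-> exists y', out_lift y' = y.
Proof.
split; last by case=> y' <-; exact: (out_liftP y').1.
move=> ny; set v := hv theta (hv (nquot_map rS) (val y)).
have ov : outdeg v == 0.
  rewrite /v (outdeg_iso _ theta_iso); apply/eqP/S_outdeg0.
  by exists y.
exists (exist _ v ov); apply: S_out_inj => //; first exact: (out_liftP _).1.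
by apply: theta_inj; rewrite (out_liftP _).2.
Qed.

Local Notation gl := (glue_cospan NP in_lift out_lift).
Local Notation glS := (gl (ioCospan S)).

Lemma theta_cin : hcomp (cin glS) theta = cin (ioCospan S').
Proof. by apply: discrete_hom_ext => [|x]; [apply: discrete_ofP | exact: (in_liftP x).2]. Qed.

Lemma theta_cout : hcomp (cout glS) theta = cout (ioCospan S').
Proof. by apply: discrete_hom_ext => [|y]; [apply: discrete_ofP | exact: (out_liftP y).2]. Qed.

Section System.
Variables (Idx : finType) (Rs : Idx -> rule Sg) (HR : forall i, left_connected_rule (Rs i)).

Lemma derivation_node_gluing i (mu : hom (rL (Rs i)) S) H C c k h rr d :
  @derivation _ _ _ (Rs i) (ioCospan S) H mu C c k h rr d ->
  exists C' c' k' h' rr' d',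
    @derivation _ _ _ (Rs i) (ioCospan S') (gl H) (hcomp mu eps') C' c' k' h' rr' d'.
Proof.
move=> D; have acH := chain_acyclic_sub (derivation_reach (HR i) D) chain_acyclic_S.
have [C' [c' [k' [h' [rr' [d' D']]]]]] :=
  derivation_glue NP_uniq in_lift_inj out_lift_inj in_lift_im out_lift_im (HR i) D
    chain_acyclic_S acH.
have [theta' [thetaK' theta'K]] := theta_iso.
have ei : hcomp (cin (ioCospan S')) theta' = cin glS.
  by rewrite -theta_cin hcompA thetaK' hcomph1.
have eo : hcomp (cout (ioCospan S')) theta' = cout glS.
  by rewrite -theta_cout hcompA thetaK' hcomph1.
exists C', c', (hcomp k' theta), h', rr', d'; rewrite -thetaK -hcompA.
exact: (derivation_iso_source (G' := ioCospan S') (G := glS) (phi := theta') (psi := theta)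
  (HR i) theta'K thetaK' ei eo D').
Qed.

Lemma cp_joinable_node_gluing i j (m1 : hom (rL (Rs i)) S) (m2 : hom (rL (Rs j)) S) :
  yields_cp Rs i j m1 m2 -> cp_joinable Rs i j m1 m2 ->
  cp_joinable Rs i j (hcomp m1 eps') (hcomp m2 eps').
Proof.
case=> _ _ _ [H1 [C1 [c1 [k1 [h1 [r1 [d1 [H2 [C2 [c2 [k2 [h2 [r2 [d2 [D1 D2 _ _]]]]]]]]]]]]]]].
move=> Hj H1' C1' c1' k1' h1' r1' d1' H2' C2' c2' k2' h2' r2' d2' D1' D2'.
have ac1 := chain_acyclic_sub (derivation_reach (HR i) D1) chain_acyclic_S.
have ac2 := chain_acyclic_sub (derivation_reach (HR j) D2) chain_acyclic_S.
have J := joinable_glue NP_uniq in_lift_inj out_lift_inj in_lift_im out_lift_im HR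
  (Hj _ _ _ _ _ _ _ _ _ _ _ _ _ _ D1 D2) ac1 ac2.
have [C1g [c1g [k1g [h1g [r1g [d1g Dg1]]]]]] := derivation_node_gluing D1.
have [C2g [c2g [k2g [h2g [r2g [d2g Dg2]]]]]] := derivation_node_gluing D2.
exact (joinable_iso HR (cospan_iso_sym (derivation_uniq (HR i) Dg1 D1'))
                        (cospan_iso_sym (derivation_uniq (HR j) Dg2 D2')) J).
Qed.

End System.
End NodeGluing.

Lemma node_gluing_pairs Sg (r1 r2 : rule Sg) (S : hyp Sg) (eps : hom (coprod (rL r1) (rL r2)) S)
    (N : {set hV S * hV S}) :
  left_connected_rule r1 -> left_connected_rule r2 -> node_gluing eps N ->
  forall a b, (a, b) \in N -> [/\ indeg a = 0, outdeg b = 0 & outdeg a != 0].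
Proof.
move=> lc1 lc2 [HN _] a b abN.
case: HN => /(_ _ abN) /= [[ia [v [iv Ev]]] [ob _]]; split=> //; rewrite -Ev.
  exact (contra (@outdeg0_hom _ _ _ (hcomp (iota1 _ _) eps) v) (rL_outdeg_indeg0 lc1 iv)).
exact (contra (@outdeg0_hom _ _ _ (hcomp (iota2 _ _) eps) v) (rL_outdeg_indeg0 lc2 iv)).
Qed.

Theorem mainTheorem10 (Sg : signature) (Idx : finType) (Rs : Idx -> rule Sg)
  (HR : forall i, left_connected_rule (Rs i))
  (i j : Idx)
  (M : {set hE (rL (Rs i)) * hE (rL (Rs j))}) (HM : hedge_gluing M)
  (S : hyp Sg) (eps : hom (coprod (rL (Rs i)) (rL (Rs j))) S)
  (Heps : hedge_coeq M eps)
  (N : {set hV S * hV S}) (HN : node_gluing eps N)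
  (S' : hyp Sg) (eps' : hom S S') (Heps' : node_coeq N eps')
  (Hcp' : yields_cp Rs i j (hcomp (hcomp (iota1 _ _) eps) eps')
                           (hcomp (hcomp (iota2 _ _) eps) eps'))
  (Hcp : yields_cp Rs i j (hcomp (iota1 _ _) eps) (hcomp (iota2 _ _) eps))
  (Hj : cp_joinable Rs i j (hcomp (iota1 _ _) eps) (hcomp (iota2 _ _) eps)) :
  cp_joinable Rs i j (hcomp (hcomp (iota1 _ _) eps) eps')
                     (hcomp (hcomp (iota2 _ _) eps) eps').
Proof.
case: (Hcp) => _ _ maS _; case: Hcp' => _ _ [_ maS' _ _ _] _.
exact (cp_joinable_node_gluing Heps' (node_gluing_pairs (HR i) (HR j) HN) HN.2 maS maS' HR Hcp Hj).
Qed.
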